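(* Consider any concurrent run of the Block-STM algorithm (described in the context) on a block of $n$ transactions $tx_0,\dots,tx_{n-1}$. At any time $T$ at which all transactions $tx_0,\dots,tx_{n-1}$ are globally committed, the following hold. (i) The set of memory locations $p$ such that the multi-version map $\mathit{data}$ contains some entry $(p,j)$ is exactly the set of locations written in the sequential run of $tx_0,\dots,tx_{n-1}$. (ii) For every such location $p$, $\mathtt{read}(p, n)$ returns status $\mathtt{OK}$ with a value equal to the content of $p$ at the end of the sequential run.
   Context: Model: threads perform atomic operations that appear to take place in a single global order; a ''time'' is a point in this order. Locks protect per-transaction status and dependency sets. Problem. A block is a sequence of transactions $tx_0,\dots,tx_{n-1}$ ($n=\mathtt{BLOCK.size()}$). Each transaction is a deterministic program that reads and writes memory locations. The sequential run executes $tx_0$ to completion on the initial storage, applies its writes, then $tx_1$, and so on. Shared state. MVMemory: a map $\mathit{data}$ from pairs $(\text{location}, \text{txn index})$ to either a pair (incarnation number, value) or a special marker ESTIMATE; arrays $\mathit{last\_written\_locations}[j]$ (set of locations) and $\mathit{last\_read\_set}[j]$ (set of (location, version) pairs), each loaded/stored atomically. A version is a pair $(j,i)$ (transaction index, incarnation number). Scheduler: atomic counters $\mathit{execution\_idx}=0$, $\mathit{validation\_idx}=0$, $\mathit{decrease\_cnt}=0$, $\mathit{num\_active\_tasks}=0$, flag $\mathit{done\_marker}=$false; per transaction $j$ a lock-protected $\mathit{txn\_status}[j]=(\text{incarnation}, \text{status})$, initially $(0,\mathtt{READY\_TO\_EXECUTE})$, status $\in\{\mathtt{READY\_TO\_EXECUTE},\mathtt{EXECUTING},\mathtt{EXECUTED},\mathtt{ABORTING}\}$;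 and a lock-protected dependency set $\mathit{txn\_dependency}[j]$, initially empty. MVMemory operations. $\mathtt{read}(p,j)$: among entries $(p,k)$ with $k<j$ take the largest $k$; if none, return NOT_FOUND; if that entry is ESTIMATE return READ_ERROR with blocking index $k$; else return OK with version $(k,\text{incarnation})$ and the value. $\mathtt{record}((j,i),R,W)$: set $\mathit{data}[(p,j)]:=(i,v)$ for each $(p,v)\in W$; remove entries $(p,j)$ for $p$ in the old $\mathit{last\_written\_locations}[j]$ but not written in $W$; store the new location set; store $\mathit{last\_read\_set}[j]:=R$; return whether $W$ wrote a location not in the old set. $\mathtt{convert\_writes\_to\_estimates}(j)$: set $\mathit{data}[(p,j)]:=$ESTIMATE for all $p\in \mathit{last\_written\_locations}[j]$. $\mathtt{validate\_read\_set}(j)$: for each $(p,v)\in\mathit{last\_read\_set}[j]$ redo $\mathtt{read}(p,j)$; return false if it gives READ_ERROR, or NOT_FOUND while $v\neq\bot$, or OK with a version $\neq v$ (including when $v=\bot$); else true. VM.execute($j$): runs $tx_j$ locally, collecting a write-set (last value per location); a read of a location already in the write-set returns that value; otherwise it calls $\mathtt{read}(p,j)$: on NOT_FOUND it reads initial storage and records $(p,\bot)$ in the read-set; on OK it uses the value and records $(p,\text{version})$; on READ_ERROR it stops and returns READ_ERROR with the blocking index. It never writes shared memory. Scheduler. $\mathtt{decrease\_execution\_idx}(t)$ / $\mathtt{decrease\_validation\_idx}(t)$: atomically set the index to $\min(\text{index},t)$, then increment $\mathit{decrease\_cnt}$. $\mathtt{try\_incarnate}(k)$: if $k<n$ and,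 under lock, status of $tx_k$ is $\mathtt{READY\_TO\_EXECUTE}$ with incarnation $i$, set it to $\mathtt{EXECUTING}$ and return $(k,i)$; otherwise decrement $\mathit{num\_active\_tasks}$ and return none. $\mathtt{next\_task}$: if $\mathit{validation\_idx}<\mathit{execution\_idx}$: if $\mathit{validation\_idx}\ge n$ call check_done and return none; else increment $\mathit{num\_active\_tasks}$, fetch-and-increment $\mathit{validation\_idx}$ obtaining $k$; if $k<n$ and status of $tx_k$ is $\mathtt{EXECUTED}$ with incarnation $i$ return validation task $(k,i)$, else decrement $\mathit{num\_active\_tasks}$ and return none. Otherwise analogously: if $\mathit{execution\_idx}\ge n$ call check_done and return none; else increment $\mathit{num\_active\_tasks}$, fetch-and-increment $\mathit{execution\_idx}$ obtaining $k$, return $\mathtt{try\_incarnate}(k)$ as an execution task. $\mathtt{check\_done}$: read $c:=\mathit{decrease\_cnt}$; if $\min(\mathit{execution\_idx},\mathit{validation\_idx})\ge n$ and $\mathit{num\_active\_tasks}=0$ and $\mathit{decrease\_cnt}=c$ (reads in this order), set $\mathit{done\_marker}:=$true. Execution task $(k,i)$: run VM.execute($k$). If READ_ERROR with blocking index $b$: under lock of $\mathit{txn\_dependency}[b]$, if the status of $tx_b$ is $\mathtt{EXECUTED}$ the dependency attempt returns false and the execution task is retried immediately; otherwise set status of $tx_k$ to $\mathtt{ABORTING}$, insert $k$ into $\mathit{txn\_dependency}[b]$, release, decrement $\mathit{num\_active\_tasks}$, no new task. Otherwise call $\mathtt{record}$, obtaining flag $w$, then finish_execution: set status of $tx_k$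 to $\mathtt{EXECUTED}$; swap out $\mathit{txn\_dependency}[k]$ for the empty set; for each dependent $d$ set $\mathit{txn\_status}[d]:=(\text{incarnation}+1,\mathtt{READY\_TO\_EXECUTE})$; if nonempty call $\mathtt{decrease\_execution\_idx}$(min dependent). Then if $\mathit{validation\_idx}>k$: if $w$ call $\mathtt{decrease\_validation\_idx}(k)$, else return validation task $(k,i)$ to the caller (leaving $\mathit{num\_active\_tasks}$ unchanged). If no task was returned, decrement $\mathit{num\_active\_tasks}$. Validation task $(k,i)$: compute $\mathtt{validate\_read\_set}(k)$; if false, try to abort: under lock, if $\mathit{txn\_status}[k]=(i,\mathtt{EXECUTED})$ set status to $\mathtt{ABORTING}$ and ''aborted'' is true. If aborted: $\mathtt{convert\_writes\_to\_estimates}(k)$; set $\mathit{txn\_status}[k]:=(i+1,\mathtt{READY\_TO\_EXECUTE})$; $\mathtt{decrease\_validation\_idx}(k+1)$; if $\mathit{execution\_idx}>k$ and $\mathtt{try\_incarnate}(k)$ returns a version, return that execution task to the caller (with $\mathit{num\_active\_tasks}$ unchanged). Otherwise decrement $\mathit{num\_active\_tasks}$. Each thread runs: while $\mathit{done\_marker}$ is false, perform any task in hand (an execution task may yield a validation task and vice versa), else obtain one via next_task. A thread joins when it exits this loop. Intervals. A pre-validation of $tx_j$ starts when a fetch-and-increment of $\mathit{validation\_idx}$ returns $j$, and finishes just before the corresponding decrement of $\mathit{num\_active\_tasks}$ in next_task, or just before the resulting validation task is returned. Execution of version $(j,i)$ starts when status of $tx_j$ is set to $\mathtt{EXECUTING}$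 with incarnation $i$; it finishes when it is aborted by the dependency mechanism (status set to $\mathtt{ABORTING}$), or just before the final decrement of $\mathit{num\_active\_tasks}$ in finish_execution, or just before a validation task is returned from it. Validation of $(j,i)$ starts when a validation task $(j,i)$ is handed to a thread, and finishes just before the final decrement of $\mathit{num\_active\_tasks}$ in its finishing step, or just before an execution task is returned from it. Global commit index at time $T$: the minimum of $\mathit{validation\_idx}$, all $j$ whose status is not $\mathtt{EXECUTED}$, all indices with an ongoing pre-validation, and all transaction indices of versions with ongoing execution or validation, at time $T$. Transactions $tx_0,\dots,tx_k$ are globally committed at $T$ if the global commit index at $T$ is strictly greater than $k$. *)

From mathcomp Require Import all_boot ssralg ssrint.
Set Implicit Arguments.
Unset Strict Implicit.
Unset Printing Implicit Defensive.

Section BlockSTM.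
Variables (Loc : eqType) (Val : Type).

Inductive prog :=
| Ret
| Rd of Loc & (Val -> prog)
| Wr of Loc & Val & prog.

Definition wset := seq (Loc * Val).
Fixpoint ws_get (ws : wset) (p : Loc) : option Val :=
  match ws with
  | [::] => None
  | (q, v) :: r => if q == p then Some v else ws_get r p
  end.
Definition ws_upd (ws : wset) (p : Loc) (v : Val) : wset :=
  (p, v) :: [seq e <- ws | e.1 != p].

Fixpoint run_tx (m : Loc -> Val) (pr : prog) (ws : wset) : wset :=
  match pr with
  | Ret => ws
  | Rd p c => run_tx m (c (odflt (m p) (ws_get ws p))) ws
  | Wr p v c => run_tx m c (ws_upd ws p v)
  end.
Definition apply_ws (m : Loc -> Val) (ws : wset) : Loc -> Val :=
  fun p => odflt (m p) (ws_get ws p).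
Fixpoint seq_run (m : Loc -> Val) (txs : seq prog) (w : seq Loc)
  : (Loc -> Val) * seq Loc :=
  match txs with
  | [::] => (m, w)
  | t :: r => let ws := run_tx m t [::] in
              seq_run (apply_ws m ws) r (w ++ map fst ws)
  end.
Definition seq_final (init : Loc -> Val) (txs : seq prog) : Loc -> Val :=
  (seq_run init txs [::]).1.
Definition seq_written (init : Loc -> Val) (txs : seq prog) : seq Loc :=
  (seq_run init txs [::]).2.

Inductive entry := Est | EVal of nat & Val.  (* ESTIMATE | (incarnation, value) *)
Definition mvdata := Loc -> nat -> option entry.
Inductive rres := RNotFound | ROk of nat & nat & Val | RErr of nat.
Fixpoint mvread (d : mvdata) (p : Loc) (j : nat) : rres :=
  match j with
  | 0 => RNotFound
  | j'.+1 => match d p j' with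
             | Some Est => RErr j'
             | Some (EVal i v) => ROk j' i v
             | None => mvread d p j'
             end
  end.
(* read-sets: versions, None = bottom *)
Definition rset := seq (Loc * option (nat * nat)).
Definition entry_valid (d : mvdata) (p : Loc) (k : nat) (v : option (nat * nat)) : bool :=
  match mvread d p k with
  | RNotFound => v == None
  | RErr _ => false
  | ROk j i _ => v == Some (j, i)
  end.

Inductive tstat := READY | EXECUTING | EXECUTED | ABORTING.
Definition is_executed (x : tstat) : bool := if x is EXECUTED then true else false.
Definition is_ready (x : tstat) : bool := if x is READY then true else false.

Record shared := Shared {
  data : mvdata;
  lwl : nat -> seq Loc;            (* last_written_locations *)
  lrs : nat -> rset;               (* last_read_set *)
  eidx : nat;                      (* execution_idx *)
  vidx : nat;                      (* validation_idx *)
  dcnt : nat;                      (* decrease_cnt *)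
  nact : int;                      (* num_active_tasks *)
  dmark : bool;                    (* done_marker *)
  stat : nat -> nat * tstat;       (* txn_status *)
  deps : nat -> seq nat            (* txn_dependency *)
}.

Definition upd {A : eqType} {B : Type} (f : A -> B) (a : A) (b : B) : A -> B :=
  fun x => if x == a then b else f x.
Definition upd_data (d : mvdata) (p : Loc) (k : nat) (e : option entry) : mvdata :=
  fun q j => if (q == p) && (j == k) then e else d q j.

Definition set_data s x := Shared x (lwl s) (lrs s) (eidx s) (vidx s) (dcnt s) (nact s) (dmark s) (stat s) (deps s).
Definition set_lwl s x := Shared (data s) x (lrs s) (eidx s) (vidx s) (dcnt s) (nact s) (dmark s) (stat s) (deps s).
Definition set_lrs s x := Shared (data s) (lwl s) x (eidx s) (vidx s) (dcnt s) (nact s) (dmark s) (stat s) (deps s).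
Definition set_eidx s x := Shared (data s) (lwl s) (lrs s) x (vidx s) (dcnt s) (nact s) (dmark s) (stat s) (deps s).
Definition set_vidx s x := Shared (data s) (lwl s) (lrs s) (eidx s) x (dcnt s) (nact s) (dmark s) (stat s) (deps s).
Definition set_dcnt s x := Shared (data s) (lwl s) (lrs s) (eidx s) (vidx s) x (nact s) (dmark s) (stat s) (deps s).
Definition set_nact s x := Shared (data s) (lwl s) (lrs s) (eidx s) (vidx s) (dcnt s) x (dmark s) (stat s) (deps s).
Definition set_dmark s x := Shared (data s) (lwl s) (lrs s) (eidx s) (vidx s) (dcnt s) (nact s) x (stat s) (deps s).
Definition set_stat s x := Shared (data s) (lwl s) (lrs s) (eidx s) (vidx s) (dcnt s) (nact s) (dmark s) x (deps s).
Definition set_deps s x := Shared (data s) (lwl s) (lrs s) (eidx s) (vidx s) (dcnt s) (nact s) (dmark s) (stat s) x.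

Definition inc_act s := set_nact s (nact s + 1)%R.
Definition dec_act s := set_nact s (nact s - 1)%R.
Definition inc_dcnt s := set_dcnt s (dcnt s).+1.

Definition init_shared : shared :=
  Shared (fun _ _ => None) (fun _ => [::]) (fun _ => [::]) 0 0 0 0%R false
         (fun _ => (0, READY)) (fun _ => [::]).

Inductive task := TExec of nat & nat | TVal of nat & nat.

(* program counters of a thread; the nat arguments are (txn index, incarnation) *)
Inductive tstate :=
| Loop of option task               (* loop head, with the task in hand *)
| Joined of option task
(* next_task *)
| NT_LV | NT_LE of nat
| NV_L | NV_I | NV_F | NV_C of nat | NV_D of nat
| NE_L | NE_I | NE_F
(* try_incarnate k (Some i: called from validation task (k,i)) *)
| TI of nat & option nat | TI_D of nat & option nat
(* check_done *)
| CD0 | CD1 of nat | CD2 of nat & nat | CD3 of nat | CD4 of nat | CD5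
(* execution task: VM.execute, dependency, record, finish_execution *)
| ExRun of nat & nat & prog & wset & rset
| ExDep of nat & nat & nat
| ExDepDec
| RecW of nat & nat & wset & rset & wset
| RecL of nat & nat & wset & rset
| RecR of nat & nat & wset & rset & seq Loc & seq Loc
| RecSL of nat & nat & wset & rset & seq Loc
| RecSR of nat & nat & rset & bool
| Fin0 of nat & nat & bool
| Fin1 of nat & nat & bool
| Fin2 of nat & nat & bool & seq nat & seq nat
| Fin3 of nat & nat & bool & nat
| Fin4 of nat & nat & bool
| Fin5 of nat & nat & bool
| Fin6 of nat & nat | Fin7 of nat & nat | Fin8 of nat & nat
(* validation task *)
| VLR of nat & nat | VChk of nat & nat & rset | VAb of nat & nat
| VConv of nat & nat | VEst of nat & nat & seq Loc | VSR of nat & nat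
| VD1 of nat & nat | VD2 of nat & nat | VLE of nat & nat | VFin of nat & nat.

Definition seqmin (s : seq nat) : nat := foldr minn (head 0 s) s.

Section Steps.
Variables (init : Loc -> Val) (txs : seq prog).
Local Notation n := (size txs).
Local Notation tx k := (nth Ret txs k).

Definition start (t : task) : tstate :=
  match t with
  | TExec k i => ExRun k i (tx k) [::] [::]
  | TVal k i => VLR k i
  end.

(* one atomic operation (on shared memory, possibly with local computation) *)
Inductive tstep : shared -> tstate -> shared -> tstate -> Prop :=
| S_done s ot : dmark s = true -> tstep s (Loop ot) s (Joined ot)
| S_task s t : dmark s = false -> tstep s (Loop (Some t)) s (start t)
| S_next s : dmark s = false -> tstep s (Loop None) s NT_LV
| S_NT_LV s : tstep s NT_LV s (NT_LE (vidx s))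
| S_NT_LE s v : tstep s (NT_LE v) s (if v < eidx s then NV_L else NE_L)
| S_NV_L s : tstep s NV_L s (if n <= vidx s then CD0 else NV_I)
| S_NV_I s : tstep s NV_I (inc_act s) NV_F
| S_NV_F s : tstep s NV_F (set_vidx s (vidx s).+1) (NV_C (vidx s))
| S_NV_C s k : tstep s (NV_C k) s
    (if (k < n) && is_executed (stat s k).2 then Loop (Some (TVal k (stat s k).1))
     else NV_D k)
| S_NV_D s k : tstep s (NV_D k) (dec_act s) (Loop None)
| S_NE_L s : tstep s NE_L s (if n <= eidx s then CD0 else NE_I)
| S_NE_I s : tstep s NE_I (inc_act s) NE_F
| S_NE_F s : tstep s NE_F (set_eidx s (eidx s).+1) (TI (eidx s) None)
| S_TI_ok s k vo : k < n -> is_ready (stat s k).2 ->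
    tstep s (TI k vo) (set_stat s (upd (stat s) k ((stat s k).1, EXECUTING)))
          (Loop (Some (TExec k (stat s k).1)))
| S_TI_fail s k vo : ~~ ((k < n) && is_ready (stat s k).2) ->
    tstep s (TI k vo) s (TI_D k vo)
| S_TI_D s k vo : tstep s (TI_D k vo) (dec_act s) (Loop None)
| S_CD0 s : tstep s CD0 s (CD1 (dcnt s))
| S_CD1 s c : tstep s (CD1 c) s (CD2 c (eidx s))
| S_CD2 s c e : tstep s (CD2 c e) s (if n <= minn e (vidx s) then CD3 c else Loop None)
| S_CD3 s c : tstep s (CD3 c) s (if nact s == 0%R then CD4 c else Loop None)
| S_CD4 s c : tstep s (CD4 c) s (if dcnt s == c then CD5 else Loop None)
| S_CD5 s : tstep s CD5 (set_dmark s true) (Loop None)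
| S_Ex_ret s k i ws rs : tstep s (ExRun k i Ret ws rs) s (RecW k i ws rs ws)
| S_Ex_wr s k i p v c ws rs :
    tstep s (ExRun k i (Wr p v c) ws rs) s (ExRun k i c (ws_upd ws p v) rs)
| S_Ex_rd_local s k i p c ws rs v : ws_get ws p = Some v ->
    tstep s (ExRun k i (Rd p c) ws rs) s (ExRun k i (c v) ws rs)
| S_Ex_rd_mv s k i p c ws rs : ws_get ws p = None ->
    tstep s (ExRun k i (Rd p c) ws rs) s
      (match mvread (data s) p k with
       | RNotFound => ExRun k i (c (init p)) ws (rcons rs (p, None))
       | ROk j i' v => ExRun k i (c v) ws (rcons rs (p, Some (j, i')))
       | RErr b => ExDep k i b
       end)
(* dependency (atomic critical section) *)
| S_ExDep_retry s k i b : is_executed (stat s b).2 ->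
    tstep s (ExDep k i b) s (ExRun k i (tx k) [::] [::])
| S_ExDep_abort s k i b : ~~ is_executed (stat s b).2 ->
    tstep s (ExDep k i b)
      (set_deps (set_stat s (upd (stat s) k ((stat s k).1, ABORTING)))
                (upd (deps s) b (if k \in deps s b then deps s b else k :: deps s b)))
      ExDepDec
| S_ExDepDec s : tstep s ExDepDec (dec_act s) (Loop None)
(* record: write entries (in any order), load old locations, remove stale
   entries (in any order), store locations, store read-set *)
| S_RecW s k i ws rs pre post p v :
    tstep s (RecW k i ws rs (pre ++ (p, v) :: post))
          (set_data s (upd_data (data s) p k (Some (EVal i v))))
          (RecW k i ws rs (pre ++ post))
| S_RecW_done s k i ws rs : tstep s (RecW k i ws rs [::]) s (RecL k i ws rs)
| S_RecL s k i ws rs : tstep s (RecL k i ws rs) s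
    (RecR k i ws rs (lwl s k) [seq q <- lwl s k | q \notin map fst ws])
| S_RecR s k i ws rs prev pre post q :
    tstep s (RecR k i ws rs prev (pre ++ q :: post))
          (set_data s (upd_data (data s) q k None))
          (RecR k i ws rs prev (pre ++ post))
| S_RecR_done s k i ws rs prev : tstep s (RecR k i ws rs prev [::]) s (RecSL k i ws rs prev)
| S_RecSL s k i ws rs prev :
    tstep s (RecSL k i ws rs prev) (set_lwl s (upd (lwl s) k (map fst ws)))
          (RecSR k i rs (has (fun q => q \notin prev) (map fst ws)))
| S_RecSR s k i rs w : tstep s (RecSR k i rs w) (set_lrs s (upd (lrs s) k rs)) (Fin0 k i w)
| S_Fin0 s k i w : tstep s (Fin0 k i w)
    (set_stat s (upd (stat s) k ((stat s k).1, EXECUTED))) (Fin1 k i w)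
| S_Fin1 s k i w : tstep s (Fin1 k i w) (set_deps s (upd (deps s) k [::]))
    (Fin2 k i w (deps s k) (deps s k))
| S_Fin2 s k i w ds pre post d : tstep s (Fin2 k i w ds (pre ++ d :: post))
    (set_stat s (upd (stat s) d ((stat s d).1.+1, READY))) (Fin2 k i w ds (pre ++ post))
| S_Fin2_done s k i w ds : tstep s (Fin2 k i w ds [::]) s
    (if ds is [::] then Fin5 k i w else Fin3 k i w (seqmin ds))
| S_Fin3 s k i w t : tstep s (Fin3 k i w t) (set_eidx s (minn (eidx s) t)) (Fin4 k i w)
| S_Fin4 s k i w : tstep s (Fin4 k i w) (inc_dcnt s) (Fin5 k i w)
| S_Fin5 s k i w : tstep s (Fin5 k i w) s
    (if k < vidx s then (if w then Fin6 k i else Loop (Some (TVal k i))) else Fin8 k i)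
| S_Fin6 s k i : tstep s (Fin6 k i) (set_vidx s (minn (vidx s) k)) (Fin7 k i)
| S_Fin7 s k i : tstep s (Fin7 k i) (inc_dcnt s) (Fin8 k i)
| S_Fin8 s k i : tstep s (Fin8 k i) (dec_act s) (Loop None)
| S_VLR s k i : tstep s (VLR k i) s (VChk k i (lrs s k))
| S_VChk s k i pre post p v : tstep s (VChk k i (pre ++ (p, v) :: post)) s
    (if entry_valid (data s) p k v then VChk k i (pre ++ post) else VAb k i)
| S_VChk_done s k i : tstep s (VChk k i [::]) s (VFin k i)
| S_VAb_ok s k i : (stat s k).1 = i -> is_executed (stat s k).2 ->
    tstep s (VAb k i) (set_stat s (upd (stat s) k (i, ABORTING))) (VConv k i)
| S_VAb_fail s k i : ~~ (((stat s k).1 == i) && is_executed (stat s k).2) ->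
    tstep s (VAb k i) s (VFin k i)
| S_VConv s k i : tstep s (VConv k i) s (VEst k i (lwl s k))
| S_VEst s k i pre post p : tstep s (VEst k i (pre ++ p :: post))
    (set_data s (upd_data (data s) p k (Some Est))) (VEst k i (pre ++ post))
| S_VEst_done s k i : tstep s (VEst k i [::]) s (VSR k i)
| S_VSR s k i : tstep s (VSR k i) (set_stat s (upd (stat s) k (i.+1, READY))) (VD1 k i)
| S_VD1 s k i : tstep s (VD1 k i) (set_vidx s (minn (vidx s) k.+1)) (VD2 k i)
| S_VD2 s k i : tstep s (VD2 k i) (inc_dcnt s) (VLE k i)
| S_VLE s k i : tstep s (VLE k i) s (if k < eidx s then TI k (Some i) else VFin k i)
| S_VFin s k i : tstep s (VFin k i) (dec_act s) (Loop None).

Definition config := (shared * seq tstate)%type.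

Inductive step : config -> config -> Prop :=
| Step s ts t s' x' : t < size ts -> tstep s (nth (Loop None) ts t) s' x' ->
    step (s, ts) (s', set_nth (Loop None) ts t x').

(* configurations occurring at some time of some run with [m] threads *)
Inductive reachable (m : nat) : config -> Prop :=
| R_init : reachable m (init_shared, nseq m (Loop None))
| R_step c c' : reachable m c -> step c c' -> reachable m c'.

(* transaction indices of ongoing pre-validations / executions / validations *)
Definition ongoing (x : tstate) : seq nat :=
  match x with
  | Loop (Some (TExec k _)) | Loop (Some (TVal k _))
  | Joined (Some (TExec k _)) | Joined (Some (TVal k _)) => [:: k]
  | NV_C k | NV_D k => [:: k]                                  (* pre-validation *)
  | TI k (Some _) | TI_D k (Some _) => [:: k]                  (* validation *)
  | ExRun k _ _ _ _ | ExDep k _ _ => [:: k]                    (* execution *)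
  | RecW k _ _ _ _ | RecL k _ _ _ | RecR k _ _ _ _ _ | RecSL k _ _ _ _
  | RecSR k _ _ _ => [:: k]
  | Fin0 k _ _ | Fin1 k _ _ | Fin2 k _ _ _ _ | Fin3 k _ _ _ | Fin4 k _ _
  | Fin5 k _ _ | Fin6 k _ | Fin7 k _ | Fin8 k _ => [:: k]
  | VLR k _ | VChk k _ _ | VAb k _ | VConv k _ | VEst k _ _ | VSR k _
  | VD1 k _ | VD2 k _ | VLE k _ | VFin k _ => [:: k]          (* validation *)
  | _ => [::]
  end.

(* global commit index at a configuration *)
Definition gci (c : config) : nat :=
  foldr minn (vidx c.1)
    (flatten (map ongoing c.2) ++
     [seq j <- iota 0 n | ~~ is_executed (stat c.1 j).2]).

End Steps.
End BlockSTM.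

From mathcomp Require Import all_boot ssralg ssrint zify.
From Stdlib Require List.
Local Notation In := List.In.
Set Implicit Arguments.
Unset Strict Implicit.
Unset Printing Implicit Defensive.

(* Along the run we keep a ghost map [W] recording, for each incarnation
   [(k, i)] that has finished VM.execute, the write-set it produced.  The
   invariant [stm_inv] says that every value entry of MVMemory for [tx_k] is
   the value [W] assigns to that incarnation; that every EXECUTED [tx_k] has
   recorded exactly its write-set together with a read-set whose versions,
   looked up in [W], replay an execution of [tx_k]; and that every EXECUTED
   transaction whose read-set may have become invalid lies at or above
   [validation_idx] or is covered by a thread that will validate it again or
   lower [validation_idx].  When
   all transactions are globally committed, [validation_idx >= n] and no thread
   works on an index below [n], so every read-set is valid; an induction on [j]
   then shows that [read(p, j)] agrees with the sequential run of
   [tx_0 .. tx_(j-1)], which yields both claims at [j = n]. *)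

Arguments Loop {Loc Val} _.          Arguments Joined {Loc Val} _.
Arguments NV_F {Loc Val}.            Arguments NV_C {Loc Val} _.
Arguments NV_D {Loc Val} _.          Arguments TI {Loc Val} _ _.
Arguments ExDep {Loc Val} _ _ _.     Arguments ExDepDec {Loc Val}.
Arguments RecSR {Loc Val} _ _ _ _.   Arguments Fin0 {Loc Val} _ _ _.
Arguments Fin1 {Loc Val} _ _ _.      Arguments Fin2 {Loc Val} _ _ _ _ _.
Arguments Fin3 {Loc Val} _ _ _ _.    Arguments Fin4 {Loc Val} _ _ _.
Arguments Fin5 {Loc Val} _ _ _.      Arguments Fin6 {Loc Val} _ _.
Arguments Fin7 {Loc Val} _ _.        Arguments Fin8 {Loc Val} _ _.
Arguments VLR {Loc Val} _ _.         Arguments VChk {Loc Val} _ _ _.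
Arguments VAb {Loc Val} _ _.         Arguments VConv {Loc Val} _ _.
Arguments VEst {Loc Val} _ _ _.      Arguments VSR {Loc Val} _ _.
Arguments VD1 {Loc Val} _ _.         Arguments VD2 {Loc Val} _ _.
Arguments VFin {Loc Val} _ _.        Arguments Ret {Loc Val}.
Arguments Est {Val}.                 Arguments RErr {Val} _.
Arguments RNotFound {Val}.

Section SeqDropMid.
Variable T : eqType.
Implicit Types (pre post : seq T) (x y : T).

Lemma uniq_drop_mid pre post x : uniq (pre ++ x :: post) -> uniq (pre ++ post).
Proof. by rewrite !cat_uniq /= => /and3P [-> /norP [_ ->] /andP [_ ->]]. Qed.

Lemma notin_drop_mid pre post x : uniq (pre ++ x :: post) -> x \notin pre ++ post.
Proof.
by rewrite cat_uniq /= mem_cat => /and3P [_ /norP [xpre _] /andP [xpost _]]; apply/norP.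
Qed.

Lemma mem_drop_mid pre post x y : y != x -> (y \in pre ++ x :: post) = (y \in pre ++ post).
Proof. by move=> yx; rewrite !mem_cat in_cons (negbTE yx). Qed.

Lemma mem_mid pre post x : x \in pre ++ x :: post.
Proof. by rewrite mem_cat in_cons eqxx orbT. Qed.

Lemma mem_drop_midW pre post x y : y \in pre ++ post -> y \in pre ++ x :: post.
Proof. by rewrite !mem_cat in_cons => /orP [->|->]; rewrite ?orbT. Qed.

End SeqDropMid.

Lemma In_drop_midW (T : Type) (pre post : seq T) x e :
  In e (pre ++ post) -> In e (pre ++ x :: post).
Proof.
by case/(List.in_app_or pre post) => ?; apply: List.in_or_app; [left | right; right].
Qed.

Lemma In_mid (T : Type) (pre post : seq T) x : In x (pre ++ x :: post).
Proof. by apply: List.in_or_app; right; left. Qed.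

Lemma foldr_minn_le (a x : nat) (l : seq nat) : x \in l -> foldr minn a l <= x.
Proof.
elim: l => [|y l IH] //=; rewrite in_cons => /orP [/eqP ->|/IH]; first exact: geq_minl.
exact: leq_trans (geq_minr _ _).
Qed.

Lemma foldr_minn_le_init (a : nat) (l : seq nat) : foldr minn a l <= a.
Proof. by elim: l => [|y l IH] //=; apply: leq_trans (geq_minr _ _) IH. Qed.

(** * Write-sets and multi-version reads *)

Section Correctness.
Variables (Loc : eqType) (Val : Type) (init : Loc -> Val) (txs : seq (prog Loc Val)).
Local Notation n := (size txs).
Local Notation tx k := (nth Ret txs k).
Local Notation prog := (prog Loc Val).
Local Notation shared := (shared Loc Val).
Local Notation tstate := (tstate Loc Val).
Local Notation wset := (wset Loc Val).
Local Notation rset := (rset Loc).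
Local Notation mvdata := (mvdata Loc Val).
Local Notation EST := (Some (@Est Val)).
Local Notation thr ts t := (nth (Loop None) ts t).
Implicit Types (p q : Loc) (ws : wset) (rs : rset) (s : shared) (x : tstate) (ts : seq tstate).

Lemma isSome_ws_get ws p : isSome (ws_get ws p) = (p \in map fst ws).
Proof.
elim: ws => [|[q v] ws IH] //=; rewrite in_cons eq_sym.
by case: (p =P q) => [->|_]; rewrite ?eqxx.
Qed.

Lemma ws_get_mem ws p v : ws_get ws p = Some v -> p \in map fst ws.
Proof. by rewrite -isSome_ws_get => ->. Qed.

Lemma ws_get_notin ws p : p \notin map fst ws -> ws_get ws p = None.
Proof. by rewrite -isSome_ws_get; case: (ws_get ws p). Qed.

Lemma In_map_fst ws p v : In (p, v) ws -> p \in map fst ws.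
Proof.
elim: ws => [|[q w] ws IH] //= [[-> _]|/IH]; rewrite in_cons ?eqxx // => ->.
by rewrite orbT.
Qed.

Lemma ws_get_In ws p v : uniq (map fst ws) -> In (p, v) ws -> ws_get ws p = Some v.
Proof.
elim: ws => [|[q w] ws IH] //= /andP [qws u] [[-> ->]|pv]; first by rewrite eqxx.
case: (q =P p) => [qp|_]; last exact: IH.
by subst q; rewrite (In_map_fst pv) in qws.
Qed.

Lemma uniq_ws_upd ws p v : uniq (map fst ws) -> uniq (map fst (ws_upd ws p v)).
Proof.
move=> u; have /= -> : map fst [seq e <- ws | e.1 != p] = [seq q <- map fst ws | q != p].
  by rewrite filter_map.
by rewrite (filter_uniq _ u) mem_filter eqxx.
Qed.

Section MVRead.
Implicit Types (d : mvdata) (e : option (entry Val)).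

Lemma mvread_ROk_data d p j k i v : mvread d p j = ROk k i v -> d p k = Some (EVal i v).
Proof.
elim: j => [|j IH] //=.
by case E: (d p j) => [[|i' v']|] // [<- <- <-].
Qed.

Lemma mvread_RNotFound_data d p j k : mvread d p j = RNotFound -> k < j -> d p k = None.
Proof.
elim: j => [|j IH] //=; case E: (d p j) => [[|i' v']|] // nf.
by rewrite ltnS leq_eqVlt => /orP [/eqP -> //|/(IH nf)].
Qed.

Lemma mvread_upd_data_other d p k e q j : (q != p) || (j <= k) ->
  mvread (upd_data d p k e) q j = mvread d q j.
Proof.
elim: j => [|j IH] //= H.
have -> : upd_data d p k e q j = d q j.
  rewrite /upd_data; case: (q =P p) H => //= _ jk.
  by case: (j =P k) jk => // ->; rewrite ltnn.
case: (d q j) => [[|i v]|] //; apply: IH.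
by case/orP: H => [->//|/ltnW ->]; rewrite orbT.
Qed.

(* A read at [j] that reports no READ_ERROR stops above the ESTIMATE at [k]. *)
Lemma mvread_upd_data_Est d p k e j : d p k = Some Est -> k < j ->
  (forall b, mvread d p j <> RErr b) ->
  mvread (upd_data d p k e) p j = mvread d p j.
Proof.
move=> dk; elim: j => [|j IH] //= kj noerr.
have [jk|jk] := eqVneq j k; first by subst; move: noerr; rewrite dk => /(_ k).
have -> : upd_data d p k e p j = d p j by rewrite /upd_data eqxx /= (negbTE jk).
move: noerr; case: (d p j) => [[|i v]|] // noerr.
by apply: IH => //; rewrite ltn_neqAle eq_sym jk -ltnS.
Qed.

Lemma entry_valid_upd_Est d p k e q j v : d p k = Some Est ->
  entry_valid d q j v -> entry_valid (upd_data d p k e) q j v.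
Proof.
rewrite /entry_valid => dk val.
have [qp|qp] := eqVneq q p; last by rewrite mvread_upd_data_other ?qp.
subst q; have [kj|jk] := ltnP k j; last by rewrite mvread_upd_data_other ?jk ?orbT.
by rewrite mvread_upd_data_Est // => b err; rewrite err in val.
Qed.

Lemma entry_valid_upd_high d p k e q j v : j <= k ->
  entry_valid (upd_data d p k e) q j v = entry_valid d q j v.
Proof. by move=> jk; rewrite /entry_valid mvread_upd_data_other // jk orbT. Qed.

End MVRead.

(** * The sequential run and replayed executions *)

Lemma seq_run_cat m (a b : seq prog) w :
  seq_run m (a ++ b) w = seq_run (seq_run m a w).1 b (seq_run m a w).2.
Proof. by elim: a m w => [|t a IH] m w //=. Qed.

Definition seq_prefix j := seq_run init (take j txs) [::].

Lemma seq_prefixS j : j < n ->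
  seq_prefix j.+1 = (apply_ws (seq_prefix j).1 (run_tx (seq_prefix j).1 (tx j) [::]),
                     (seq_prefix j).2 ++ map fst (run_tx (seq_prefix j).1 (tx j) [::])).
Proof. by move=> jn; rewrite /seq_prefix (take_nth Ret jn) -cats1 seq_run_cat. Qed.

Lemma seq_prefix_size : seq_prefix n = seq_run init txs [::].
Proof. by rewrite /seq_prefix take_size. Qed.

(* Ghost state: [W k i] is the write-set produced by incarnation [(k, i)] once
   its VM.execute has completed. *)
Definition ghost := nat -> nat -> option wset.
Implicit Types (W : ghost).

Definition ghost_sub W W' :=
  forall k i ws, W k i = Some ws -> W' k i = Some ws.

Lemma ghost_sub_refl W : ghost_sub W W.
Proof. by []. Qed.

Definition ghost_set W k i ws : ghost :=
  fun k' i' => if (k' == k) && (i' == i) then Some ws else W k' i'.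

Lemma ghost_sub_set W k i ws :
  W k i = None -> ghost_sub W (ghost_set W k i ws).
Proof.
move=> Wki k' i' ws'; rewrite /ghost_set.
by case: (k' =P k) => [->|] //=; case: (i' =P i) => [->|] //; rewrite Wki.
Qed.

(* The read-set version [None] (the paper's bottom) stands for the initial
   storage. *)
Definition version_value W p (ver : option (nat * nat)) : option Val :=
  match ver with
  | None => Some (init p)
  | Some (k, i) => obind (fun ws => ws_get ws p) (W k i)
  end.

(* [exec_prefix W pr0 pr ws rs]: VM.execute of [pr0] can reach the residual
   program [pr] with write-set [ws] and read-set [rs], each shared-memory read
   having returned the value its version stands for in [W]. *)
Inductive exec_prefix W (pr0 : prog) : prog -> wset -> rset -> Prop :=
| EP_start : exec_prefix W pr0 pr0 [::] [::]
| EP_write p v c ws rs : exec_prefix W pr0 (Wr p v c) ws rs ->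
    exec_prefix W pr0 c (ws_upd ws p v) rs
| EP_read_local p c ws rs v : exec_prefix W pr0 (Rd p c) ws rs -> ws_get ws p = Some v ->
    exec_prefix W pr0 (c v) ws rs
| EP_read_mv p c ws rs ver v : exec_prefix W pr0 (Rd p c) ws rs -> ws_get ws p = None ->
    version_value W p ver = Some v -> exec_prefix W pr0 (c v) ws (rcons rs (p, ver)).

Lemma version_value_sub W W' p ver v : ghost_sub W W' ->
  version_value W p ver = Some v -> version_value W' p ver = Some v.
Proof.
move=> WW'; case: ver => [[k i]|] //=.
by case E: (W k i) => [ws|] //=; rewrite (WW' _ _ _ E).
Qed.

Lemma exec_prefix_sub W W' pr0 pr ws rs : ghost_sub W W' ->
  exec_prefix W pr0 pr ws rs -> exec_prefix W' pr0 pr ws rs.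
Proof.
move=> WW'; elim=> {pr ws rs}.
- exact: EP_start.
- by move=> p v c ws rs _ IH; apply: EP_write.
- by move=> p c ws rs v _ IH wsp; apply: EP_read_local IH wsp.
- move=> p c ws rs ver v _ IH wsp val.
  exact: EP_read_mv IH wsp (version_value_sub WW' val).
Qed.

Lemma exec_prefix_uniq W pr0 pr ws rs : exec_prefix W pr0 pr ws rs -> uniq (map fst ws).
Proof. by elim=> // *; apply: uniq_ws_upd. Qed.

Lemma exec_prefix_run_tx W pr0 pr ws rs (m : Loc -> Val) : exec_prefix W pr0 pr ws rs ->
  (forall e, e \in rs -> version_value W e.1 e.2 = Some (m e.1)) ->
  run_tx m pr0 [::] = run_tx m pr ws.
Proof.
elim=> {pr ws rs} [//|p v c ws rs _ IH /IH -> //|p c ws rs v _ IH wsp /IH ->|].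
  by rewrite /= wsp.
move=> p c ws rs ver v _ IH wsp val mrs.
rewrite IH /= => [|e ers]; last by apply: mrs; rewrite mem_rcons in_cons ers orbT.
have := mrs (p, ver); rewrite mem_rcons mem_head val wsp => /(_ isT) [->] //.
Qed.

(** * The invariant *)

Ltac case_tstate x :=
  destruct x as [[[? ?|? ?]|]|[[? ?|? ?]|]| | | | | | | | | | | | | | | | | | | | | | | | | | |
                 | | | | | | | | | | | | | | | | | |].

Definition estimates_only s k :=
  forall p, data s p k = if p \in lwl s k then EST else None.

Definition data_holds s k i (ws : wset) :=
  forall p, data s p k = omap (EVal i) (ws_get ws p).

Definition recorded s W k i := k < n /\ exists ws, W k i = Some ws /\
  lwl s k = map fst ws /\ data_holds s k i ws /\ exec_prefix W (tx k) Ret ws (lrs s k).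

(* [d] was aborted on a read dependency and waits to be resumed. *)
Definition suspended s W d :=
  exists i, stat s d = (i, ABORTING) /\ estimates_only s d /\ W d i = None.

Record txn_inv s W k : Prop := {
  txn_ready : forall i, stat s k = (i, READY) -> estimates_only s k /\ W k i = None;
  txn_executed : forall i, stat s k = (i, EXECUTED) -> recorded s W k i;
  txn_ghost_fresh : forall i, (stat s k).1 < i -> W k i = None;
  txn_data : forall p i v, data s p k = Some (EVal i v) ->
    version_value W p (Some (k, i)) = Some v;
  txn_data_high : n <= k -> forall p, data s p k = None;
  txn_lwl_uniq : uniq (lwl s k)
}.

(* Thread states during which the thread alone may modify the entries of
   transaction [k]. *)
Definition owns k x : bool :=
  match x with
  | Loop (Some (TExec k' _)) | Joined (Some (TExec k' _)) => k' == k
  | ExRun k' _ _ _ _ | ExDep k' _ _ | RecW k' _ _ _ _ | RecL k' _ _ _ | RecR k' _ _ _ _ _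
  | RecSL k' _ _ _ _ | RecSR k' _ _ _ | Fin0 k' _ _ | VConv k' _ | VEst k' _ _ | VSR k' _ =>
      k' == k
  | _ => false
  end.

Definition resuming x : seq nat := if x is Fin2 _ _ _ _ r then r else [::].

Definition thread_inv s W x : Prop :=
  match x with
  | Loop (Some (TExec k i)) | Joined (Some (TExec k i)) | ExDep k i _ =>
      k < n /\ stat s k = (i, EXECUTING) /\ estimates_only s k /\ W k i = None
  | ExRun k i pr ws rs =>
      k < n /\ stat s k = (i, EXECUTING) /\ estimates_only s k /\ W k i = None /\
      exec_prefix W (tx k) pr ws rs
  | RecW k i ws rs rest =>
      k < n /\ stat s k = (i, EXECUTING) /\ W k i = Some ws /\ exec_prefix W (tx k) Ret ws rs /\
      uniq (map fst rest) /\ (forall e, In e rest -> In e ws) /\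
      forall p, data s p k = if (p \in map fst ws) && (p \notin map fst rest)
                             then omap (EVal i) (ws_get ws p)
                             else if p \in lwl s k then EST else None
  | RecL k i ws rs =>
      k < n /\ stat s k = (i, EXECUTING) /\ W k i = Some ws /\ exec_prefix W (tx k) Ret ws rs /\
      forall p, data s p k = if p \in map fst ws then omap (EVal i) (ws_get ws p)
                             else if p \in lwl s k then EST else None
  | RecR k i ws rs prev rest =>
      k < n /\ stat s k = (i, EXECUTING) /\ W k i = Some ws /\ exec_prefix W (tx k) Ret ws rs /\
      prev = lwl s k /\ uniq rest /\ (forall q, q \in rest -> q \notin map fst ws) /\
      forall p, data s p k = if p \in map fst ws then omap (EVal i) (ws_get ws p)
                             else if p \in rest then EST else None
  | RecSL k i ws rs prev =>
      k < n /\ stat s k = (i, EXECUTING) /\ W k i = Some ws /\ exec_prefix W (tx k) Ret ws rs /\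
      prev = lwl s k /\ data_holds s k i ws
  | RecSR k i rs w =>
      k < n /\ stat s k = (i, EXECUTING) /\ exists ws, W k i = Some ws /\
      exec_prefix W (tx k) Ret ws rs /\ lwl s k = map fst ws /\ data_holds s k i ws
  | Fin0 k i w => k < n /\ stat s k = (i, EXECUTING) /\ recorded s W k i
  | Fin2 k i w ds rest =>
      uniq rest /\ forall d, d \in rest -> suspended s W d /\ forall b, d \notin deps s b
  | VConv k i => k < n /\ stat s k = (i, ABORTING) /\ W k i <> None /\
      forall p, p \notin lwl s k -> data s p k = None
  | VEst k i rest => k < n /\ stat s k = (i, ABORTING) /\ W k i <> None /\
      (forall p, p \in rest -> p \in lwl s k) /\
      (forall p, p \notin lwl s k -> data s p k = None) /\
      (forall p, p \in lwl s k -> p \notin rest -> data s p k = EST)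
  | VSR k i => k < n /\ stat s k = (i, ABORTING) /\ W k i <> None /\ estimates_only s k
  | _ => True
  end.

Definition read_set_valid s j := forall e, e \in lrs s j -> entry_valid (data s) e.1 j e.2.

(* Thread state [x] guarantees that the read-set of the EXECUTED transaction
   [j] will be validated again, or that [validation_idx] will drop to [j] or
   below, before all transactions can be committed. *)
Definition revalidates s j x : Prop :=
  match x with
  | NV_C k => k = j
  | Loop (Some (TVal k i)) | Joined (Some (TVal k i)) | VLR k i | VAb k i =>
      k = j /\ i = (stat s j).1
  | VChk k i rest => k = j /\ i = (stat s j).1 /\
      forall e, e \in lrs s j -> e \in rest \/ entry_valid (data s) e.1 j e.2
  | Fin1 k i w | Fin2 k i w _ _ | Fin3 k i w _ | Fin4 k i w | Fin5 k i w =>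
      (k = j /\ i = (stat s j).1) \/ (k < j /\ w)
  | Fin0 k _ w | RecSR k _ _ w => k < j /\ w
  | Fin6 k _ => k <= j
  | RecW k _ ws _ _ | RecL k _ ws _ => k < j /\ has (fun q => q \notin lwl s k) (map fst ws)
  | RecR k _ ws _ prev _ | RecSL k _ ws _ prev => k < j /\ has (fun q => q \notin prev) (map fst ws)
  | VConv k _ | VEst k _ _ | VSR k _ | VD1 k _ => k < j
  | _ => False
  end.

Record stm_inv s ts W : Prop := {
  inv_txn : forall k, txn_inv s W k;
  inv_thread : forall t, thread_inv s W (thr ts t);
  inv_owns_unique : forall k t1 t2, t1 <> t2 -> owns k (thr ts t1) -> owns k (thr ts t2) -> False;
  inv_deps_suspended : forall b d, d \in deps s b -> suspended s W d;
  inv_deps_uniq : forall b, uniq (deps s b);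
  inv_deps_disjoint : forall b b' d, d \in deps s b -> d \in deps s b' -> b = b';
  inv_resuming_unique : forall d t1 t2, t1 <> t2 ->
    d \in resuming (thr ts t1) -> d \in resuming (thr ts t2) -> False;
  inv_validation : forall j i, j < n -> stat s j = (i, EXECUTED) ->
    read_set_valid s j \/ vidx s <= j \/ exists t, revalidates s j (thr ts t)
}.

Lemma stm_inv_init m : stm_inv (init_shared Loc Val) (nseq m (Loop None)) (fun _ _ => None).
Proof.
have thr0 t : thr (nseq m (Loop None : tstate)) t = Loop None by rewrite nth_nseq if_same.
by split=> //= [t|k t1 t2 _|t1 t2 d _]; rewrite ?thr0.
Qed.

Definition agree_at s s' W W' k :=
  [/\ stat s' k = stat s k, forall p, data s' p k = data s p k, lwl s' k = lwl s k,
      lrs s' k = lrs s k & forall i, W' k i = W k i].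

Lemma estimates_only_agree s s' W W' k :
  agree_at s s' W W' k -> estimates_only s k -> estimates_only s' k.
Proof. by case=> _ ed el _ _ est p; rewrite ed el est. Qed.

Lemma data_holds_agree s s' W W' k i ws :
  agree_at s s' W W' k -> data_holds s k i ws -> data_holds s' k i ws.
Proof. by case=> _ ed _ _ _ dh p; rewrite ed dh. Qed.

Lemma recorded_agree s s' W W' k i : ghost_sub W W' -> agree_at s s' W W' k ->
  recorded s W k i -> recorded s' W' k i.
Proof.
move=> WW' ag [kn [ws [Wk [lk [dh ep]]]]]; case: (ag) => _ _ el er eW.
split=> //; exists ws; rewrite el er eW; do !split=> //; first exact: data_holds_agree ag dh.
exact: exec_prefix_sub WW' ep.
Qed.

Lemma suspended_agree s s' W W' d : agree_at s s' W W' d -> suspended s W d -> suspended s' W' d.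
Proof.
move=> ag [i [sd [est Wd]]]; case: (ag) => es _ _ _ eW.
by exists i; rewrite es eW; do !split=> //; apply: estimates_only_agree ag est.
Qed.

Lemma txn_inv_agree s s' W W' k : ghost_sub W W' -> agree_at s s' W W' k ->
  txn_inv s W k -> txn_inv s' W' k.
Proof.
move=> WW' ag [rdy exd fresh val high uq]; have [es ed el _ eW] := ag.
split=> [i|i|i|p i v|kn p|]; rewrite ?es ?ed ?el ?eW.
- by case/rdy=> est ->; split=> //; apply: estimates_only_agree ag est.
- by move/exd; apply: recorded_agree.
- exact: fresh.
- by move/val; apply: version_value_sub.
- exact: high.
- exact: uq.
Qed.

Lemma owns_stat s W x k : thread_inv s W x -> owns k x ->
  (exists i, stat s k = (i, EXECUTING)) \/ (exists i, stat s k = (i, ABORTING) /\ W k i <> None).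
Proof.
case_tstate x => //= + /eqP ek; subst => - [_ [sk rest]];
  solve [left; eexists; eassumption | right; eexists; split; [eassumption | by case: rest]].
Qed.

Lemma owns_not_suspended s W x k : thread_inv s W x -> owns k x -> ~ suspended s W k.
Proof.
move=> tx own [i [sk [_ Wk]]].
case: (owns_stat tx own) => [[i' sk'] | [i' [sk' Wk']]]; rewrite sk in sk' => //.
by case: sk' Wk => ->.
Qed.

Lemma resuming_suspended s W x d : thread_inv s W x -> d \in resuming x ->
  suspended s W d /\ forall b, d \notin deps s b.
Proof. by case_tstate x => //= [[_ rest]] /rest. Qed.

Lemma thread_inv_frame s s' W W' x : ghost_sub W W' ->
  (forall k, owns k x -> agree_at s s' W W' k) ->
  (forall d, d \in resuming x ->
     agree_at s s' W W' d /\ forall b, d \in deps s' b -> d \in deps s b) ->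
  thread_inv s W x -> thread_inv s' W' x.
Proof.
move=> WW' own res; case_tstate x => //=;
  try (have ag := own _ (eqxx _); case: (ag) => es ed el er eW).
all: try by case=> kn [sk [est Wk]]; rewrite es eW; do !split=> //;
  apply: estimates_only_agree ag est.
- by case=> kn [sk [est [Wk ep]]]; rewrite es eW; do !split=> //;
    [apply: estimates_only_agree ag est | apply: exec_prefix_sub WW' ep].
- case=> kn [sk [Wk [ep [uq [sub dk]]]]]; rewrite es eW; do !split=> //;
    [apply: exec_prefix_sub WW' ep | by move=> p; rewrite ed el dk].
- case=> kn [sk [Wk [ep dk]]]; rewrite es eW; do !split=> //;
    [apply: exec_prefix_sub WW' ep | by move=> p; rewrite ed el dk].
- case=> kn [sk [Wk [ep [pr [uq [rest dk]]]]]]; rewrite es eW el; do !split=> //;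
    [apply: exec_prefix_sub WW' ep | by move=> p; rewrite ed dk].
- case=> kn [sk [Wk [ep [pr dh]]]]; rewrite es eW el; do !split=> //;
    [apply: exec_prefix_sub WW' ep | apply: data_holds_agree ag dh].
- case=> kn [sk [ws [Wk [ep [lk dh]]]]]; rewrite es; do !split=> //; exists ws; rewrite eW el;
    do !split=> //; [apply: exec_prefix_sub WW' ep | apply: data_holds_agree ag dh].
- by case=> kn [sk rec]; rewrite es; do 2!split=> //; apply: recorded_agree WW' ag rec.
- case=> uq rest; split=> // d dr; have [sus nodeps] := rest d dr; have [ag deps'] := res d dr.
  split; first exact: suspended_agree ag sus.
  by move=> b0; apply/negP => /deps'; apply/negP; apply: nodeps.
- by case=> kn [sk [Wk dk]]; rewrite es eW el; do !split=> //; move=> p; rewrite ed; apply: dk.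
- by case=> kn [sk [Wk [sub [dk dl]]]]; rewrite es eW el; do !split=> //; move=> p; rewrite ed;
    [apply: dk | apply: dl].
- by case=> kn [sk [Wk est]]; rewrite es eW; do !split=> //; apply: estimates_only_agree ag est.
Qed.

Definition validity_preserved s s' j :=
  forall e, entry_valid (data s) e.1 j e.2 -> entry_valid (data s') e.1 j e.2.

Lemma revalidates_frame s s' j x : revalidates s j x -> (stat s' j).1 = (stat s j).1 ->
  lrs s' j = lrs s j -> validity_preserved s s' j ->
  (forall k, owns k x -> lwl s' k = lwl s k) -> revalidates s' j x.
Proof.
move=> rv es er vp el; case_tstate x => //=; move: rv => /=; rewrite ?es //.
all: try by rewrite (el _ (eqxx _)).
case=> -> [-> rest]; do 2!split=> //; move=> e; rewrite er => /rest [|/vp]; by [left | right].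
Qed.

Lemma read_set_valid_frame s s' j : read_set_valid s j -> lrs s' j = lrs s j ->
  validity_preserved s s' j -> read_set_valid s' j.
Proof. by move=> val er vp e; rewrite er => /val /vp. Qed.

Lemma inv_counters s s' ts W : data s' = data s -> lwl s' = lwl s -> lrs s' = lrs s ->
  stat s' = stat s -> deps s' = deps s ->
  (forall j, vidx s <= j -> vidx s' <= j \/ exists t, revalidates s' j (thr ts t)) ->
  stm_inv s ts W -> stm_inv s' ts W.
Proof.
case: s => d l r e v dc na dm st de; case: s' => d' l' r' e' v' dc' na' dm' st' de' /=.
move=> -> -> -> -> -> vv' [] txn ?????? valid; split=> //.
  by move=> k; apply: txn_inv_agree (txn k).
move=> j i jn sj; have [val|[vj|rv]] := valid j i jn sj; [by left | | by right; right].
by right; apply: vv'.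
Qed.

Lemma thr_set ts t x' t' :
  thr (set_nth (Loop None) ts t x') t' = if t' == t then x' else thr ts t'.
Proof. exact: nth_set_nth. Qed.

Lemma pairwise_set_thread (P : nat -> tstate -> tstate -> Prop) ts t x' :
  (forall k x y, P k x y -> P k y x) ->
  (forall k t1 t2, t1 <> t2 -> P k (thr ts t1) (thr ts t2)) ->
  (forall k t', t' <> t -> P k x' (thr ts t')) ->
  forall k t1 t2, t1 <> t2 ->
    P k (thr (set_nth (Loop None) ts t x') t1) (thr (set_nth (Loop None) ts t x') t2).
Proof.
move=> sym old new k t1 t2 t12; rewrite !thr_set.
case: (t1 =P t) => [e1|n1]; case: (t2 =P t) => [e2|n2].
- by subst.
- exact: new.
- exact/sym/new.
- exact: old.
Qed.

(* No thread other than [t] may modify the entries of transaction [k]. *)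
Definition held_by s ts t k :=
  [\/ owns k (thr ts t), exists i, stat s k = (i, READY), exists i, stat s k = (i, EXECUTED)
     | k \in resuming (thr ts t)].

Section Held.
Variables (s : shared) (ts : seq tstate) (W : ghost) (t k : nat).
Hypotheses (I : stm_inv s ts W) (held : held_by s ts t k).

Lemma held_not_owned t' : t' <> t -> ~~ owns k (thr ts t').
Proof.
move=> t't; apply/negP => own; have tx := inv_thread I t'.
case: held => [own' | [i sk] | [i sk] | res].
- exact: inv_owns_unique I _ _ _ t't own own'.
- by case: (owns_stat tx own) => [[? sk'] | [? [sk' _]]]; rewrite sk in sk'.
- by case: (owns_stat tx own) => [[? sk'] | [? [sk' _]]]; rewrite sk in sk'.
- by case: (resuming_suspended (inv_thread I t) res) => /(owns_not_suspended tx own).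
Qed.

Lemma held_not_deps b : k \notin deps s b.
Proof.
apply/negP => kb; have sus := inv_deps_suspended I kb; have [i [sk _]] := sus.
case: held => [own | [? sk'] | [? sk'] | res].
- exact: owns_not_suspended (inv_thread I t) own sus.
- by rewrite sk in sk'.
- by rewrite sk in sk'.
- by have [_ /(_ b)] := resuming_suspended (inv_thread I t) res; rewrite kb.
Qed.

Lemma held_not_resuming t' : t' <> t -> k \notin resuming (thr ts t').
Proof.
move=> t't; apply/negP => res'; have [sus _] := resuming_suspended (inv_thread I t') res'.
have [i [sk _]] := sus.
case: held => [own | [? sk'] | [? sk'] | res].
- exact: owns_not_suspended (inv_thread I t) own sus.
- by rewrite sk in sk'.
- by rewrite sk in sk'.
- exact: inv_resuming_unique I _ _ _ t't res' res.
Qed.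

Lemma thread_inv_others s' W' : ghost_sub W W' ->
  (forall k', k' != k -> agree_at s s' W W' k') ->
  (forall b d, d \in deps s' b -> d \in deps s b \/ d = k) ->
  forall t', t' <> t -> thread_inv s' W' (thr ts t').
Proof.
move=> WW' ag deps' t' t't; apply: thread_inv_frame (inv_thread I t') => //.
  move=> k' own; apply: ag; apply: contraNneq (held_not_owned t't) => <-.
  exact: own.
move=> d res; have dk : d != k by apply: contraNneq (held_not_resuming t't) => <-.
split=> [|b /deps' [//|/eqP]]; first exact: ag.
by rewrite (negbTE dk).
Qed.

End Held.

Section SetThread.
Variables (s s' : shared) (ts : seq tstate) (W W' : ghost) (t : nat) (x' : tstate).
Hypothesis I : stm_inv s ts W.
Local Notation ts' := (set_nth (Loop None) ts t x').

Lemma thread_inv_set_thread : thread_inv s' W' x' ->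
  (forall t', t' <> t -> thread_inv s' W' (thr ts t')) ->
  forall t', thread_inv s' W' (thr ts' t').
Proof. by move=> tx' others t'; rewrite thr_set; case: (t' =P t) => // /others. Qed.

Lemma owns_unique_set_thread : (forall k, owns k x' -> held_by s ts t k) ->
  forall k t1 t2, t1 <> t2 -> owns k (thr ts' t1) -> owns k (thr ts' t2) -> False.
Proof.
move=> own; apply: (pairwise_set_thread (P := fun k x y => owns k x -> owns k y -> False)).
- by move=> k x y + ox oy => /(_ oy ox).
- exact: inv_owns_unique I.
- by move=> k t' t't /own held; apply/negP; apply: held_not_owned I held _ t't.
Qed.

Lemma resuming_unique_set_thread :
  (forall d, d \in resuming x' -> d \in resuming (thr ts t) \/ exists b, d \in deps s b) ->
  forall d t1 t2, t1 <> t2 -> d \in resuming (thr ts' t1) -> d \in resuming (thr ts' t2) -> False.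
Proof.
move=> res.
apply: (pairwise_set_thread (P := fun d x y => d \in resuming x -> d \in resuming y -> False)).
- by move=> d x y + dx dy => /(_ dy dx).
- exact: inv_resuming_unique I.
move=> d t' t't /res [r1 r2 | [b db] r2]; first exact: inv_resuming_unique I _ _ _ t't r2 r1.
by have [_ /(_ b)] := resuming_suspended (inv_thread I t') r2; rewrite db.
Qed.

Lemma validation_set_thread : vidx s' <= vidx s ->
  (forall j i, stat s' j = (i, EXECUTED) ->
     (stat s j = (i, EXECUTED) /\ lrs s' j = lrs s j) \/ revalidates s' j x') ->
  (forall j, validity_preserved s s' j \/ revalidates s' j x') ->
  (forall k t', t' <> t -> owns k (thr ts t') -> lwl s' k = lwl s k) ->
  (forall j i, j < n -> stat s j = (i, EXECUTED) -> stat s' j = stat s j -> lrs s' j = lrs s j ->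
     revalidates s j (thr ts t) -> revalidates s' j x' \/ read_set_valid s' j \/ vidx s' <= j) ->
  forall j i, j < n -> stat s' j = (i, EXECUTED) ->
    read_set_valid s' j \/ vidx s' <= j \/ exists t', revalidates s' j (thr ts' t').
Proof.
move=> vv' sj' vp lwl' rv j i jn sj.
have by_x' : revalidates s' j x' ->
    read_set_valid s' j \/ vidx s' <= j \/ exists t', revalidates s' j (thr ts' t').
  by move=> rvx; right; right; exists t; rewrite thr_set eqxx.
have [[sj0 er]|] := sj' j i sj; last exact: by_x'.
have [vpj|] := vp j; last exact: by_x'.
have [val|[vj|[t' rvt']]] := inv_validation I jn sj0.
- by left; apply: read_set_valid_frame val er vpj.
- by right; left; apply: leq_trans vv' vj.
case: (t' =P t) => [et|nt].
  subst t'; have [/by_x' //|[val|vj]] := rv j i jn sj0 (etrans sj (esym sj0)) er rvt'.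
  + by left.
  + by right; left.
right; right; exists t'; rewrite thr_set; case: eqP => // _.
apply: revalidates_frame rvt' _ er vpj _; first by rewrite sj sj0.
by move=> k own; apply: lwl' own.
Qed.

End SetThread.

Lemma inv_local_step s ts W t x' : stm_inv s ts W -> thread_inv s W x' ->
  (forall k, owns k x' -> owns k (thr ts t)) ->
  (forall d, d \in resuming x' -> d \in resuming (thr ts t)) ->
  (forall j i, j < n -> stat s j = (i, EXECUTED) -> revalidates s j (thr ts t) ->
     revalidates s j x' \/ read_set_valid s j \/ vidx s <= j) ->
  stm_inv s (set_nth (Loop None) ts t x') W.
Proof.
move=> I tx' own res rv; split.
- exact: inv_txn I.
- by apply: thread_inv_set_thread => // t' _; apply: inv_thread I t'.
- by apply: owns_unique_set_thread I _ => k /own; apply: Or41.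
- exact: inv_deps_suspended I.
- exact: inv_deps_uniq I.
- exact: inv_deps_disjoint I.
- by apply: resuming_unique_set_thread I _ => d /res; left.
- apply: validation_set_thread I _ _ _ _ _ => //.
  + by move=> j i sj; left.
  + by move=> j; left=> e.
  + by move=> j i jn sj _ _; apply: rv jn sj.
Qed.

(* The generic step: the shared state changes only at transaction [k0], which
   thread [t] holds, and possibly in the scheduler counters. *)
Lemma inv_update s ts W t s' W' x' k0 :
  stm_inv s ts W -> held_by s ts t k0 -> ghost_sub W W' ->
  (forall k, k != k0 -> agree_at s s' W W' k) -> deps s' = deps s -> vidx s' <= vidx s ->
  txn_inv s' W' k0 -> thread_inv s' W' x' ->
  (forall k, owns k x' -> held_by s ts t k) ->
  (forall d, d \in resuming x' -> d \in resuming (thr ts t)) ->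
  (forall i, stat s' k0 = (i, EXECUTED) ->
     (stat s k0 = (i, EXECUTED) /\ lrs s' k0 = lrs s k0) \/ revalidates s' k0 x') ->
  (forall j, validity_preserved s s' j \/ revalidates s' j x') ->
  (forall j i, j < n -> stat s j = (i, EXECUTED) -> stat s' j = stat s j -> lrs s' j = lrs s j ->
     revalidates s j (thr ts t) -> revalidates s' j x' \/ read_set_valid s' j \/ vidx s' <= j) ->
  stm_inv s' (set_nth (Loop None) ts t x') W'.
Proof.
move=> I held WW' ag deps' vv' txn' tx' own res sk0 vp rv.
have not_dep b d : d \in deps s b -> d != k0.
  by move=> db; apply: contraNneq _ (held_not_deps I held b) => <-.
split.
- move=> k; case: (k =P k0) => [-> //|/eqP kk0].
  exact: txn_inv_agree WW' (ag k kk0) (inv_txn I k).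
- apply: thread_inv_set_thread => //; apply: (thread_inv_others I held) => //.
  by move=> b d; rewrite deps'; left.
- exact: owns_unique_set_thread I own.
- move=> b d; rewrite deps' => db.
  exact: suspended_agree (ag d (not_dep b d db)) (inv_deps_suspended I db).
- by rewrite deps'; apply: inv_deps_uniq I.
- by rewrite deps'; apply: inv_deps_disjoint I.
- by apply: resuming_unique_set_thread I _ => d /res; left.
- apply: (validation_set_thread I vv' _ vp _ rv).
    move=> j i; case: (j =P k0) => [-> /sk0 //|/eqP jk0].
    by case: (ag j jk0) => -> _ _ -> _; left.
  move=> k t' t't own'; have kk0 : k != k0.
    by apply: contraNneq _ (held_not_owned I held t't) => <-.
  by case: (ag k kk0).
Qed.

(** * Preservation by every step *)

Lemma stat_ready s k : is_ready (stat s k).2 -> stat s k = ((stat s k).1, READY).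
Proof. by case: (stat s k) => i []. Qed.

Lemma stat_executed s k : is_executed (stat s k).2 -> stat s k = ((stat s k).1, EXECUTED).
Proof. by case: (stat s k) => i []. Qed.

Lemma agree_set_stat s W k st k' : k' != k -> agree_at s (set_stat s (upd (stat s) k st)) W W k'.
Proof. by move=> k'k; split=> //=; rewrite /upd (negbTE k'k). Qed.

Lemma agree_set_data s W k p e k' : k' != k ->
  agree_at s (set_data s (upd_data (data s) p k e)) W W k'.
Proof. by move=> k'k; split=> //= q; rewrite /upd_data (negbTE k'k) andbF. Qed.

Lemma txn_inv_set_stat s W k st : txn_inv s W k ->
  (forall i, st = (i, READY) -> estimates_only s k /\ W k i = None) ->
  (forall i, st = (i, EXECUTED) -> recorded s W k i) ->
  (forall i, st.1 < i -> W k i = None) ->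
  txn_inv (set_stat s (upd (stat s) k st)) W k.
Proof. by case=> *; split; rewrite //= /upd eqxx. Qed.

(* Only the thread owning an EXECUTING or ABORTING transaction writes its
   entries. *)
Lemma txn_inv_set_data s W k p e : txn_inv s W k ->
  ~~ is_ready (stat s k).2 -> ~~ is_executed (stat s k).2 ->
  (forall i v, e = Some (EVal i v) -> version_value W p (Some (k, i)) = Some v) ->
  (n <= k -> e = None) ->
  txn_inv (set_data s (upd_data (data s) p k e)) W k.
Proof.
case=> _ _ fresh val high uq nrdy nexd ep en.
split=> //= [i sk|i sk|p' i v|kn p'].
- by rewrite sk in nrdy.
- by rewrite sk in nexd.
- by rewrite /upd_data eqxx andbT; case: (p' =P p) => [-> /ep|_ /val].
- by rewrite /upd_data eqxx andbT; case: (p' =P p) => [_|_]; [apply: en | apply: high].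
Qed.

Lemma step_TI_ok s ts W t k vo : stm_inv s ts W -> thr ts t = TI k vo -> k < n ->
  is_ready (stat s k).2 ->
  exists W', stm_inv (set_stat s (upd (stat s) k ((stat s k).1, EXECUTING)))
    (set_nth (Loop None) ts t (Loop (Some (TExec k (stat s k).1)))) W'.
Proof.
move=> I ex kn /stat_ready sk; set i := (stat s k).1 in sk *.
have txn := inv_txn I k; have [est Wk] := txn_ready txn sk.
have held : held_by s ts t k by apply: Or42; exists i.
exists W; apply: (inv_update I held) => //=.
- exact: agree_set_stat.
- by apply: txn_inv_set_stat => // i' ii'; apply: (txn_ghost_fresh txn); rewrite sk.
- by rewrite /upd eqxx.
- by move=> k' /eqP <-.
- by rewrite /upd eqxx.
- by move=> j; left=> e.
- by rewrite ex.
Qed.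

Lemma step_Ex_ret s ts W t k i ws rs : stm_inv s ts W -> thr ts t = ExRun k i Ret ws rs ->
  exists W', stm_inv s (set_nth (Loop None) ts t (RecW k i ws rs ws)) W'.
Proof.
move=> I ex; have := inv_thread I t; rewrite ex => -[kn [sk [est [Wk ep]]]].
have held : held_by s ts t k by apply: Or41; rewrite ex /=.
set W' := ghost_set W k i ws; have WW' : ghost_sub W W' by apply: ghost_sub_set.
have W'k : W' k i = Some ws by rewrite /W' /ghost_set !eqxx.
exists W'; apply: (inv_update I held WW') => //=.
- by move=> k' k'k; split=> // i'; rewrite /W' /ghost_set (negbTE k'k).
- case: (inv_txn I k) => _ _ fresh val high uq; split=> // [i' | i' | i' ii' | p i' v /val];
    rewrite ?sk //.
  + rewrite /W' /ghost_set eqxx /=; case: (i' =P i) => [e|_]; last exact: fresh.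
    by move: ii'; rewrite sk e ltnn.
  + exact: version_value_sub.
- do !split=> //; first exact: exec_prefix_sub WW' ep; first exact: exec_prefix_uniq ep.
  by move=> p; rewrite andbN est.
- by move=> k' /eqP <-.
- by rewrite sk.
- by move=> j; left=> e.
- by rewrite ex.
Qed.

Section AddDependency.
Variables (D : nat -> seq nat) (b k : nat).
Hypothesis k_notin : forall b', k \notin D b'.
Local Notation D' := (upd D b (k :: D b)).

Lemma mem_add_dependency b' d : d \in D' b' -> (d = k /\ b' = b) \/ d \in D b'.
Proof.
rewrite /upd; case: (b' =P b) => [->|_]; last by right.
by rewrite in_cons => /orP [/eqP ->|]; [left | right].
Qed.

Lemma uniq_add_dependency : (forall b', uniq (D b')) -> forall b', uniq (D' b').
Proof. by move=> uq b'; rewrite /upd; case: eqP => _ //=; rewrite k_notin uq. Qed.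

Lemma disjoint_add_dependency : (forall b1 b2 d, d \in D b1 -> d \in D b2 -> b1 = b2) ->
  forall b1 b2 d, d \in D' b1 -> d \in D' b2 -> b1 = b2.
Proof.
move=> dis b1 b2 d /mem_add_dependency [[-> ->]|d1] /mem_add_dependency [[e ->]|d2] //.
- by rewrite (negbTE (k_notin b2)) in d2.
- by rewrite e (negbTE (k_notin b1)) in d1.
- exact: dis d1 d2.
Qed.

End AddDependency.

Lemma step_ExDep_abort s ts W t k i b : stm_inv s ts W -> thr ts t = ExDep k i b ->
  exists W', stm_inv (set_deps (set_stat s (upd (stat s) k ((stat s k).1, ABORTING)))
                (upd (deps s) b (if k \in deps s b then deps s b else k :: deps s b)))
     (set_nth (Loop None) ts t ExDepDec) W'.
Proof.
move=> I ex; have := inv_thread I t; rewrite ex => -[kn [sk [est Wk]]].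
have held : held_by s ts t k by apply: Or41; rewrite ex /=.
have nodeps b' : k \notin deps s b' := held_not_deps I held b'.
rewrite (negbTE (nodeps b)) sk /=; set s1 := set_stat _ _; set s' := set_deps _ _.
have ag k' : k' != k -> agree_at s s' W W k' by move=> k'k; split=> //=; rewrite /upd (negbTE k'k).
have txn1 : txn_inv s1 W k.
  apply: txn_inv_set_stat (inv_txn I k) _ _ _ => // i' ii'.
  by apply: (txn_ghost_fresh (inv_txn I k)); rewrite sk.
exists W; split.
- move=> k'; case: (k' =P k) => [->|/eqP k'k]; first exact: txn_inv_agree (ghost_sub_refl (W := W)) _ txn1.
  exact: txn_inv_agree (ghost_sub_refl (W := W)) (ag k' k'k) (inv_txn I k').
- apply: thread_inv_set_thread => //; apply: (thread_inv_others I held) => // b' d.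
  by case/mem_add_dependency => [[-> _]|]; [right | left].
- exact: owns_unique_set_thread I _.
- move=> b' d /mem_add_dependency [[-> _]|db]; first by exists i; rewrite /= /upd eqxx.
  apply: suspended_agree (inv_deps_suspended I db); apply: ag.
  by apply: contraNneq _ (nodeps b') => <-.
- exact: uniq_add_dependency (inv_deps_uniq I).
- exact: disjoint_add_dependency (inv_deps_disjoint I).
- exact: resuming_unique_set_thread I _.
- apply: (validation_set_thread I) => //.
  + move=> j i'; case: (j =P k) => [->|/eqP jk]; first by rewrite /= /upd eqxx.
    by case: (ag j jk) => -> _ _ -> _; left.
  + by move=> j; left=> e.
  + by rewrite ex.
Qed.

Lemma step_RecW s ts W t k i ws rs pre post p v : stm_inv s ts W ->
  thr ts t = RecW k i ws rs (pre ++ (p, v) :: post) ->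
  exists W', stm_inv (set_data s (upd_data (data s) p k (Some (EVal i v))))
     (set_nth (Loop None) ts t (RecW k i ws rs (pre ++ post))) W'.
Proof.
move=> I ex; have := inv_thread I t; rewrite ex => -[kn [sk [Wk [ep [uq [sub dk]]]]]].
have held : held_by s ts t k by apply: Or41; rewrite ex /=.
have wsp : ws_get ws p = Some v by apply: ws_get_In (exec_prefix_uniq ep) (sub _ (In_mid _ _ _)).
have pws : p \in map fst ws by apply: ws_get_mem wsp.
have uq' := uq; rewrite map_cat /= in uq'.
exists W; apply: (inv_update I held) => //.
- exact: agree_set_data.
- apply: (txn_inv_set_data (inv_txn I k)); rewrite ?sk //; last by rewrite leqNgt kn.
  by move=> _ _ [<- <-]; rewrite /= Wk /= wsp.
- rewrite /=; do !split=> //.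
  + by rewrite map_cat; apply: uniq_drop_mid uq'.
  + by move=> e ee; apply: sub; apply: In_drop_midW ee.
  + move=> q; rewrite /upd_data; case: (q =P p) => [->|/eqP qp] /=.
      by rewrite eqxx pws map_cat (notin_drop_mid uq') /= wsp.
    by rewrite dk !map_cat (mem_drop_mid _ _ qp).
- by move=> k' /eqP <-.
- by rewrite /= sk.
- move=> j; have [kj|jk] := ltnP k j; last by left=> e; rewrite entry_valid_upd_high.
  have [lp|lp] := boolP (p \in lwl s k); last first.
    by right; split=> //; apply/hasP; exists p.
  left=> e; apply: entry_valid_upd_Est.
  by rewrite dk pws map_cat mem_cat in_cons eqxx orbT /= lp.
- by rewrite ex => j i' _ _ _ _ rv; left.
Qed.

Lemma step_RecR s ts W t k i ws rs prev pre post q : stm_inv s ts W ->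
  thr ts t = RecR k i ws rs prev (pre ++ q :: post) ->
  exists W', stm_inv (set_data s (upd_data (data s) q k None))
     (set_nth (Loop None) ts t (RecR k i ws rs prev (pre ++ post))) W'.
Proof.
move=> I ex; have := inv_thread I t; rewrite ex => -[kn [sk [Wk [ep [pr [uq [rest dk]]]]]]].
have held : held_by s ts t k by apply: Or41; rewrite ex /=.
have qws : q \notin map fst ws by apply: rest; apply: mem_mid.
have qk : data s q k = EST by rewrite dk (negbTE qws) mem_mid.
exists W; apply: (inv_update I held) => //.
- exact: agree_set_data.
- by apply: (txn_inv_set_data (inv_txn I k)); rewrite ?sk.
- rewrite /=; do !split=> //.
  + exact: uniq_drop_mid uq.
  + by move=> q' /(mem_drop_midW q) /rest.
  + move=> p; rewrite /upd_data; case: (p =P q) => [->|/eqP pq] /=.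
      by rewrite eqxx (negbTE qws) (negbTE (notin_drop_mid uq)).
    by rewrite dk (mem_drop_mid _ _ pq).
- by move=> k' /eqP <-.
- by rewrite /= sk.
- by move=> j; left=> e; apply: entry_valid_upd_Est.
- by rewrite ex => j i' _ _ _ _ rv; left.
Qed.

Lemma step_RecSL s ts W t k i ws rs prev : stm_inv s ts W -> thr ts t = RecSL k i ws rs prev ->
  exists W', stm_inv (set_lwl s (upd (lwl s) k (map fst ws)))
     (set_nth (Loop None) ts t (RecSR k i rs (has (fun q => q \notin prev) (map fst ws)))) W'.
Proof.
move=> I ex; have := inv_thread I t; rewrite ex => -[kn [sk [Wk [ep [pr dh]]]]].
have held : held_by s ts t k by apply: Or41; rewrite ex /=.
exists W; apply: (inv_update I held) => //.
- by move=> k' k'k; split=> //=; rewrite /upd (negbTE k'k).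
- case: (inv_txn I k) => _ _ fresh val high _.
  by split; rewrite //= ?sk ?/upd ?eqxx //; apply: exec_prefix_uniq ep.
- by rewrite /= /upd eqxx; do !split=> //; exists ws.
- by move=> k' /eqP <-.
- by rewrite /= sk.
- by move=> j; left=> e.
- by rewrite ex => j i' _ _ _ _ rv; left.
Qed.

Lemma step_RecSR s ts W t k i rs w : stm_inv s ts W -> thr ts t = RecSR k i rs w ->
  exists W', stm_inv (set_lrs s (upd (lrs s) k rs)) (set_nth (Loop None) ts t (Fin0 k i w)) W'.
Proof.
move=> I ex; have := inv_thread I t; rewrite ex => -[kn [sk [ws [Wk [ep [lk dh]]]]]].
have held : held_by s ts t k by apply: Or41; rewrite ex /=.
exists W; apply: (inv_update I held) => //.
- by move=> k' k'k; split=> //=; rewrite /upd (negbTE k'k).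
- by case: (inv_txn I k) => *; split; rewrite //= ?sk.
- by do !split=> //; exists ws; rewrite /= /upd eqxx.
- by move=> k' /eqP <-.
- by rewrite /= sk.
- by move=> j; left=> e.
- by rewrite ex => j i' _ _ _ _ rv; left.
Qed.

Lemma step_Fin0 s ts W t k i w : stm_inv s ts W -> thr ts t = Fin0 k i w ->
  exists W', stm_inv (set_stat s (upd (stat s) k ((stat s k).1, EXECUTED)))
     (set_nth (Loop None) ts t (Fin1 k i w)) W'.
Proof.
move=> I ex; have := inv_thread I t; rewrite ex => -[kn [sk rec]].
have held : held_by s ts t k by apply: Or41; rewrite ex /=.
exists W; apply: (inv_update I held) => //.
- exact: agree_set_stat.
- apply: txn_inv_set_stat (inv_txn I k) _ _ _; rewrite sk //=; first by move=> i' [<-].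
  by move=> i' ii'; apply: (txn_ghost_fresh (inv_txn I k)); rewrite sk.
- by move=> i'; rewrite /= /upd eqxx sk => -[<-]; right; left.
- by move=> j; left=> e.
- by rewrite ex => j i' _ _ _ _ rv; left; right.
Qed.

Lemma step_Fin1 s ts W t k i w : stm_inv s ts W -> thr ts t = Fin1 k i w ->
  exists W', stm_inv (set_deps s (upd (deps s) k [::]))
     (set_nth (Loop None) ts t (Fin2 k i w (deps s k) (deps s k))) W'.
Proof.
move=> I ex; set s' := set_deps _ _.
have ag k' : agree_at s s' W W k' by [].
have deps_sub b d : d \in deps s' b -> d \in deps s b by rewrite /= /upd; case: ifP.
exists W; split.
- by move=> k'; apply: txn_inv_agree (ag k') (inv_txn I k').
- apply: thread_inv_set_thread => [|t' _].
    split; first exact: (inv_deps_uniq I).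
    move=> d dk; split; first exact: suspended_agree (ag d) (inv_deps_suspended I dk).
    move=> b; rewrite /= /upd; case: (b =P k) => [_ //|bk]; apply/negP => db.
    exact: bk (inv_deps_disjoint I db dk).
  by apply: thread_inv_frame (inv_thread I t') => // d _; split=> // b; apply: deps_sub.
- exact: owns_unique_set_thread I _.
- by move=> b d /deps_sub /(inv_deps_suspended I) /(suspended_agree (ag d)).
- by move=> b; rewrite /= /upd; case: ifP => // _; apply: (inv_deps_uniq I).
- by move=> b b' d /deps_sub db /deps_sub; apply: (inv_deps_disjoint I db).
- by apply: resuming_unique_set_thread I _ => d dk; right; exists k.
- apply: (validation_set_thread I) => //.
  + by move=> j i' sj; left.
  + by move=> j; left=> e.
  + by rewrite ex => j i' _ _ _ _ rv; left.
Qed.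

Lemma step_Fin2 s ts W t k i w ds pre post d : stm_inv s ts W ->
  thr ts t = Fin2 k i w ds (pre ++ d :: post) ->
  exists W', stm_inv (set_stat s (upd (stat s) d ((stat s d).1.+1, READY)))
     (set_nth (Loop None) ts t (Fin2 k i w ds (pre ++ post))) W'.
Proof.
move=> I ex; have := inv_thread I t; rewrite ex => -[uq rest].
have [[id [sd [est Wd]]] nodeps] := rest d (mem_mid _ _ _).
have held : held_by s ts t d by apply: Or44; rewrite ex mem_mid.
exists W; apply: (inv_update I held) => //.
- exact: agree_set_stat.
- apply: txn_inv_set_stat (inv_txn I d) _ _ _; rewrite sd //=.
    by move=> _ [<-]; split=> //; apply: (txn_ghost_fresh (inv_txn I d)); rewrite sd.
  by move=> i' ii'; apply: (txn_ghost_fresh (inv_txn I d)); rewrite sd ltnW.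
- split; first exact: uniq_drop_mid uq.
  move=> d' d'r; have d'd : d' != d.
    by apply: contraNneq (notin_drop_mid uq) => <-.
  have [sus nodeps'] := rest d' (mem_drop_midW d d'r); split=> //.
  exact: suspended_agree (agree_set_stat _ _ _ d'd) sus.
- by move=> d'; rewrite ex; apply: mem_drop_midW.
- by rewrite /= /upd eqxx.
- by move=> j; left=> e.
- by rewrite ex => j i' _ _ se _ rv; left; move: rv; rewrite /revalidates -se.
Qed.

Lemma step_VAb_ok s ts W t k i : stm_inv s ts W -> thr ts t = VAb k i ->
  (stat s k).1 = i -> is_executed (stat s k).2 ->
  exists W', stm_inv (set_stat s (upd (stat s) k (i, ABORTING)))
    (set_nth (Loop None) ts t (VConv k i)) W'.
Proof.
move=> I ex ski /stat_executed; rewrite ski => sk.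
have [kn [ws [Wk [lk [dh _]]]]] := txn_executed (inv_txn I k) sk.
have held : held_by s ts t k by apply: Or43; exists i.
exists W; apply: (inv_update I held) => //.
- exact: agree_set_stat.
- apply: txn_inv_set_stat (inv_txn I k) _ _ _ => // i' ii'.
  by apply: (txn_ghost_fresh (inv_txn I k)); rewrite sk.
- rewrite /= /upd eqxx Wk; do !split=> //.
  by move=> p; rewrite dh lk => /ws_get_notin ->.
- by move=> k' /eqP <-.
- by rewrite /= /upd eqxx.
- by move=> j; left=> e.
- by rewrite ex => j i' _ sj + _ [jk _]; subst j; rewrite /= /upd eqxx sk.
Qed.

Lemma step_VEst s ts W t k i pre post p : stm_inv s ts W -> thr ts t = VEst k i (pre ++ p :: post) ->
  exists W', stm_inv (set_data s (upd_data (data s) p k EST))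
     (set_nth (Loop None) ts t (VEst k i (pre ++ post))) W'.
Proof.
move=> I ex; have := inv_thread I t; rewrite ex => -[kn [sk [Wk [sub [dk dl]]]]].
have held : held_by s ts t k by apply: Or41; rewrite ex /=.
have pl : p \in lwl s k by apply: sub; apply: mem_mid.
exists W; apply: (inv_update I held) => //.
- exact: agree_set_data.
- by apply: (txn_inv_set_data (inv_txn I k)); rewrite ?sk // leqNgt kn.
- rewrite /= /upd_data eqxx; do !split=> //.
  + by move=> q qr; apply: sub; apply: mem_drop_midW qr.
  + by move=> q; case: (q =P p) => [-> /negP //|_] /=; apply: dk.
  + move=> q; case: (q =P p) => [-> //|/eqP qp] /= ql qr.
    by apply: dl => //; rewrite mem_drop_mid.
- by move=> k' /eqP <-.
- by rewrite /= sk.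
- move=> j; have [kj|jk] := ltnP k j; first by right.
  by left=> e; rewrite entry_valid_upd_high.
- by rewrite ex => j i' _ _ _ _ rv; left.
Qed.

Lemma step_VSR s ts W t k i : stm_inv s ts W -> thr ts t = VSR k i ->
  exists W', stm_inv (set_stat s (upd (stat s) k (i.+1, READY)))
    (set_nth (Loop None) ts t (VD1 k i)) W'.
Proof.
move=> I ex; have := inv_thread I t; rewrite ex => -[kn [sk [Wk est]]].
have held : held_by s ts t k by apply: Or41; rewrite ex /=.
exists W; apply: (inv_update I held) => //.
- exact: agree_set_stat.
- apply: txn_inv_set_stat (inv_txn I k) _ _ _ => //= [_ [<-] | i' ii'].
    by split=> //; apply: (txn_ghost_fresh (inv_txn I k)); rewrite sk.
  by apply: (txn_ghost_fresh (inv_txn I k)); rewrite sk ltnW.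
- by rewrite /= /upd eqxx.
- by move=> j; left=> e.
- by rewrite ex => j i' _ _ _ _ rv; left.
Qed.

Lemma inv_local_counters s s' ts W t x' : stm_inv s ts W ->
  data s' = data s -> lwl s' = lwl s -> lrs s' = lrs s -> stat s' = stat s -> deps s' = deps s ->
  vidx s' <= vidx s -> thread_inv s' W x' ->
  (forall k, owns k x' -> owns k (thr ts t)) ->
  (forall d, d \in resuming x' -> d \in resuming (thr ts t)) ->
  (forall j i, j < n -> stat s' j = (i, EXECUTED) -> revalidates s' j (thr ts t) ->
     revalidates s' j x' \/ read_set_valid s' j \/ vidx s' <= j) ->
  exists W', stm_inv s' (set_nth (Loop None) ts t x') W'.
Proof.
move=> I ed el er es edp vv' *; exists W; apply: inv_local_step => //.
by apply: inv_counters I => // j vj; left; apply: leq_trans vj.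
Qed.

Lemma step_task s ts W t tk : stm_inv s ts W -> thr ts t = Loop (Some tk) ->
  exists W', stm_inv s (set_nth (Loop None) ts t (start txs tk)) W'.
Proof.
move=> I ex; have tx := inv_thread I t; rewrite ex in tx.
apply: (inv_local_counters I); rewrite ?ex //; case: tk {ex} tx => k i //=.
- by case=> ? [? [? ?]]; do !split=> //; apply: EP_start.
- by move=> _ *; left.
Qed.

(* Incrementing [validation_idx] past [j] is covered by the pre-validation
   of [j] that this step starts. *)
Lemma step_NV_F s ts W t : stm_inv s ts W -> thr ts t = NV_F ->
  exists W', stm_inv (set_vidx s (vidx s).+1) (set_nth (Loop None) ts t (NV_C (vidx s))) W'.
Proof.
move=> I ex; exists W; have I' : stm_inv s (set_nth (Loop None) ts t (NV_C (vidx s))) W.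
  by apply: (inv_local_step I); rewrite ?ex.
apply: inv_counters I' => //= j vj; case: (vidx s =P j) => [<-|/eqP vs].
  by right; exists t; rewrite thr_set eqxx.
by left; rewrite ltn_neqAle vs vj.
Qed.

Lemma step_NV_C s ts W t k : stm_inv s ts W -> thr ts t = NV_C k ->
  exists W', stm_inv s (set_nth (Loop None) ts t
    (if (k < n) && is_executed (stat s k).2 then Loop (Some (TVal k (stat s k).1)) else NV_D k)) W'.
Proof.
move=> I ex; case ke: (_ && _); apply: (inv_local_counters I); rewrite ?ex //=.
- by move=> j i jn sj <-; left.
- by move=> j i jn sj jk; subst; rewrite jn sj in ke.
Qed.

Lemma step_Ex_write s ts W t k i p v c ws rs : stm_inv s ts W ->
  thr ts t = ExRun k i (Wr p v c) ws rs ->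
  exists W', stm_inv s (set_nth (Loop None) ts t (ExRun k i c (ws_upd ws p v) rs)) W'.
Proof.
move=> I ex; have := inv_thread I t; rewrite ex => -[? [? [? [? ep]]]].
by apply: (inv_local_counters I); rewrite ?ex //=; do !split=> //; apply: EP_write.
Qed.

Lemma step_Ex_read_local s ts W t k i p c ws rs v : stm_inv s ts W ->
  thr ts t = ExRun k i (Rd p c) ws rs -> ws_get ws p = Some v ->
  exists W', stm_inv s (set_nth (Loop None) ts t (ExRun k i (c v) ws rs)) W'.
Proof.
move=> I ex wsp; have := inv_thread I t; rewrite ex => -[? [? [? [? ep]]]].
by apply: (inv_local_counters I); rewrite ?ex //=; do !split=> //; apply: EP_read_local ep wsp.
Qed.

Lemma step_Ex_read_mv s ts W t k i p c ws rs : stm_inv s ts W ->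
  thr ts t = ExRun k i (Rd p c) ws rs -> ws_get ws p = None ->
  exists W', stm_inv s (set_nth (Loop None) ts t
      match mvread (data s) p k with
      | RNotFound => ExRun k i (c (init p)) ws (rcons rs (p, None))
      | ROk j i' v => ExRun k i (c v) ws (rcons rs (p, Some (j, i')))
      | RErr b => ExDep k i b
      end) W'.
Proof.
move=> I ex wsp; have := inv_thread I t; rewrite ex => -[kn [sk [est [Wk ep]]]].
case rd: (mvread _ _ _) => [|j i' v|b]; apply: (inv_local_counters I); rewrite ?ex //=.
- by do !split=> //; apply: EP_read_mv ep wsp _.
- do !split=> //; apply: EP_read_mv ep wsp _.
  exact: txn_data (inv_txn I j) _ _ _ (mvread_ROk_data rd).
Qed.

Lemma step_ExDep_retry s ts W t k i b : stm_inv s ts W -> thr ts t = ExDep k i b ->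
  exists W', stm_inv s (set_nth (Loop None) ts t (ExRun k i (tx k) [::] [::])) W'.
Proof.
move=> I ex; have := inv_thread I t; rewrite ex => -[? [? [? ?]]].
by apply: (inv_local_counters I); rewrite ?ex //=; do !split=> //; apply: EP_start.
Qed.

Lemma step_RecW_done s ts W t k i ws rs : stm_inv s ts W -> thr ts t = RecW k i ws rs [::] ->
  exists W', stm_inv s (set_nth (Loop None) ts t (RecL k i ws rs)) W'.
Proof.
move=> I ex; have := inv_thread I t; rewrite ex => -[? [? [? [? [_ [_ dk]]]]]].
apply: (inv_local_counters I); rewrite ?ex //=; last by move=> *; left.
by do !split=> //; move=> p; rewrite dk andbT.
Qed.

Lemma step_RecL s ts W t k i ws rs : stm_inv s ts W -> thr ts t = RecL k i ws rs ->
  exists W', stm_inv s (set_nth (Loop None) ts t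
     (RecR k i ws rs (lwl s k) [seq q <- lwl s k | q \notin map fst ws])) W'.
Proof.
move=> I ex; have := inv_thread I t; rewrite ex => -[? [? [? [? dk]]]].
apply: (inv_local_counters I); rewrite ?ex //=; last by move=> *; left.
do !split=> //.
- exact: filter_uniq (txn_lwl_uniq (inv_txn I k)).
- by move=> q; rewrite mem_filter => /andP [].
- by move=> p; rewrite dk mem_filter; case: (p \in map fst ws).
Qed.

Lemma step_RecR_done s ts W t k i ws rs prev : stm_inv s ts W ->
  thr ts t = RecR k i ws rs prev [::] ->
  exists W', stm_inv s (set_nth (Loop None) ts t (RecSL k i ws rs prev)) W'.
Proof.
move=> I ex; have := inv_thread I t; rewrite ex => -[? [? [? [? [? [_ [_ dk]]]]]]].
apply: (inv_local_counters I); rewrite ?ex //=; last by move=> *; left.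
by do !split=> //; move=> p; rewrite dk; case: ifP => // /negbT /ws_get_notin ->.
Qed.

Lemma step_Fin2_done s ts W t k i w ds : stm_inv s ts W -> thr ts t = Fin2 k i w ds [::] ->
  exists W', stm_inv s (set_nth (Loop None) ts t
    (if ds is [::] then Fin5 k i w else Fin3 k i w (seqmin ds))) W'.
Proof.
by move=> I ex; case: ds ex => [|d ds] ex; apply: (inv_local_counters I); rewrite ?ex //=;
  move=> *; left.
Qed.

Lemma step_Fin5 s ts W t k i w : stm_inv s ts W -> thr ts t = Fin5 k i w ->
  exists W', stm_inv s (set_nth (Loop None) ts t
    (if k < vidx s then (if w then Fin6 k i else Loop (Some (TVal k i))) else Fin8 k i)) W'.
Proof.
move=> I ex; case: ifP => kv; [case: w ex => ex|]; apply: (inv_local_counters I); rewrite ?ex //=.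
- by move=> j i' _ _ [[-> _]|[/ltnW kj _]]; left.
- by move=> j i' _ _ [[-> ->]|[_ //]]; left.
- move=> j i' _ _ [[<- _]|[kj _]]; right; right; first by rewrite leqNgt kv.
  by apply: leq_trans (ltnW kj); rewrite leqNgt kv.
Qed.

Lemma step_Fin6 s ts W t k i : stm_inv s ts W -> thr ts t = Fin6 k i ->
  exists W', stm_inv (set_vidx s (minn (vidx s) k)) (set_nth (Loop None) ts t (Fin7 k i)) W'.
Proof.
move=> I ex; apply: (inv_local_counters I); rewrite ?ex //= ?geq_minl // => j i' _ _ kj.
by right; right; apply: leq_trans kj; rewrite geq_minr.
Qed.

Lemma step_VD1 s ts W t k i : stm_inv s ts W -> thr ts t = VD1 k i ->
  exists W', stm_inv (set_vidx s (minn (vidx s) k.+1)) (set_nth (Loop None) ts t (VD2 k i)) W'.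
Proof.
move=> I ex; apply: (inv_local_counters I); rewrite ?ex //= ?geq_minl // => j i' _ _ kj.
by right; right; apply: leq_trans kj; rewrite geq_minr.
Qed.

Lemma step_VLR s ts W t k i : stm_inv s ts W -> thr ts t = VLR k i ->
  exists W', stm_inv s (set_nth (Loop None) ts t (VChk k i (lrs s k))) W'.
Proof.
move=> I ex; apply: (inv_local_counters I); rewrite ?ex //=.
by move=> j i' _ _ [<- ->]; left; do 2!split=> //; move=> e ->; left.
Qed.

Lemma step_VChk s ts W t k i pre post p v : stm_inv s ts W ->
  thr ts t = VChk k i (pre ++ (p, v) :: post) ->
  exists W', stm_inv s (set_nth (Loop None) ts t
    (if entry_valid (data s) p k v then VChk k i (pre ++ post) else VAb k i)) W'.
Proof.
move=> I ex; case: ifP => val; apply: (inv_local_counters I); rewrite ?ex //=.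
- move=> j i' _ _ [<- [-> rest]]; left; do 2!split=> //; move=> e /rest.
  case: (e =P (p, v)) => [-> _|/eqP ep]; first by right.
  by rewrite mem_drop_mid.
- by move=> j i' _ _ [-> [-> _]]; left.
Qed.

Lemma step_VChk_done s ts W t k i : stm_inv s ts W -> thr ts t = VChk k i [::] ->
  exists W', stm_inv s (set_nth (Loop None) ts t (VFin k i)) W'.
Proof.
move=> I ex; apply: (inv_local_counters I); rewrite ?ex //=.
by move=> j i' _ _ [<- [_ rest]]; right; left => e /rest [].
Qed.

Lemma step_VAb_fail s ts W t k i : stm_inv s ts W -> thr ts t = VAb k i ->
  ~~ (((stat s k).1 == i) && is_executed (stat s k).2) ->
  exists W', stm_inv s (set_nth (Loop None) ts t (VFin k i)) W'.
Proof.
move=> I ex nab; apply: (inv_local_counters I); rewrite ?ex //=.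
by move=> j i' _ sj [jk ik]; subst; rewrite sj eqxx in nab.
Qed.

Lemma step_VConv s ts W t k i : stm_inv s ts W -> thr ts t = VConv k i ->
  exists W', stm_inv s (set_nth (Loop None) ts t (VEst k i (lwl s k))) W'.
Proof.
move=> I ex; have := inv_thread I t; rewrite ex => -[? [? [? dk]]].
apply: (inv_local_counters I); rewrite ?ex //=; last by move=> *; left.
by do !split=> //; move=> p pl /negP.
Qed.

Lemma step_VEst_done s ts W t k i : stm_inv s ts W -> thr ts t = VEst k i [::] ->
  exists W', stm_inv s (set_nth (Loop None) ts t (VSR k i)) W'.
Proof.
move=> I ex; have := inv_thread I t; rewrite ex => -[? [? [? [_ [dk dl]]]]].
apply: (inv_local_counters I); rewrite ?ex //=; last by move=> *; left.
by do !split=> //; move=> p; case: ifP => pl; [apply: dl | apply: dk; rewrite pl].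
Qed.

Lemma step_done s ts W t ot : stm_inv s ts W -> thr ts t = Loop ot ->
  exists W', stm_inv s (set_nth (Loop None) ts t (Joined ot)) W'.
Proof.
move=> I ex; have tx := inv_thread I t; rewrite ex in tx.
apply: (inv_local_counters I); rewrite ?ex //; case: ot {ex} tx => [[k i|k i]|] //=.
by move=> _ *; left.
Qed.

Ltac step_by lem := solve [eapply lem; eassumption].

Lemma inv_step s ts W t s' x' : stm_inv s ts W -> tstep init txs s (thr ts t) s' x' ->
  exists W', stm_inv s' (set_nth (Loop None) ts t x') W'.
Proof.
move=> I; move ex: (thr ts t) => x st; destruct st.
all: try solve [apply: (inv_local_counters I); rewrite ?ex //= => *; left; assumption
               | case: ifP => _; apply: (inv_local_counters I); rewrite ?ex //= => *; left; assumption].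
all: first [step_by step_done | step_by step_task | step_by step_NV_F | step_by step_NV_C
  | step_by step_TI_ok | step_by step_Ex_write | step_by step_Ex_read_local
  | step_by step_Ex_read_mv | step_by step_Ex_ret | step_by step_ExDep_retry
  | step_by step_ExDep_abort | step_by step_RecW | step_by step_RecW_done | step_by step_RecL
  | step_by step_RecR | step_by step_RecR_done | step_by step_RecSL | step_by step_RecSR
  | step_by step_Fin0 | step_by step_Fin1 | step_by step_Fin2 | step_by step_Fin2_done
  | step_by step_Fin5 | step_by step_Fin6 | step_by step_VD1 | step_by step_VLR
  | step_by step_VChk | step_by step_VChk_done | step_by step_VAb_ok | step_by step_VAb_fail
  | step_by step_VConv | step_by step_VEst | step_by step_VEst_done | step_by step_VSR].
Qed.

Lemma reachable_inv m c : reachable init txs m c -> exists W, stm_inv c.1 c.2 W.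
Proof.
elim=> [|c1 c2 _ [W I] st]; first by exists (fun _ _ => None); apply: stm_inv_init.
by case: st I => s ts t s' x' _ st I; apply: inv_step I st.
Qed.

(** * Globally committed configurations *)

Lemma revalidates_ongoing s j x :
  revalidates s j x -> exists2 k, ongoing x = [:: k] & k <= j.
Proof. case_tstate x => //= rv. all: eexists; first reflexivity. all: lia. Qed.

Section Committed.
Variables (s : shared) (ts : seq tstate).
Hypothesis committed : forall k, k < n -> k < gci txs (s, ts).

Lemma committed_vidx k : k < n -> k < vidx s.
Proof. by move/committed/leq_trans; apply; apply: foldr_minn_le_init. Qed.

Lemma committed_executed j : j < n -> is_executed (stat s j).2.
Proof.
move=> jn; apply: contraTT (committed jn) => nex; rewrite -leqNgt foldr_minn_le //.
by rewrite mem_cat mem_filter nex mem_iota jn orbT.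
Qed.

Lemma committed_not_ongoing t k : k \in ongoing (thr ts t) -> n <= k.
Proof.
move=> kt; rewrite leqNgt; apply: contraTN kt => /committed kc; apply: contraTN kc => kt.
rewrite -leqNgt foldr_minn_le // mem_cat; apply/orP; left.
case: (ltnP t (size ts)) => tts; last by move: kt; rewrite nth_default.
apply/flattenP; exists (ongoing (thr ts t)) => //.
by rewrite -(nth_map (Loop None) [::]) // mem_nth // size_map.
Qed.

Lemma committed_read_set_valid W j : stm_inv s ts W -> j < n ->
  exists i, stat s j = (i, EXECUTED) /\ read_set_valid s j.
Proof.
move=> I jn; have sj := stat_executed (committed_executed jn).
exists (stat s j).1; split=> //.
have [//|[vj|[t rv]]] := inv_validation I jn sj.
  by move: (committed_vidx jn); rewrite ltnNge vj.
have [k kt kj] := revalidates_ongoing rv.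
have := committed_not_ongoing (t := t) (k := k); rewrite kt mem_head => /(_ isT).
by rewrite leqNgt (leq_ltn_trans kj jn).
Qed.

End Committed.

Section SequentialAgreement.
Variables (s : shared) (ts : seq tstate) (W : ghost).
Hypothesis I : stm_inv s ts W.

Definition mvread_matches_seq j := forall p,
  (mvread (data s) p j = RNotFound /\ (seq_prefix j).1 p = init p /\ p \notin (seq_prefix j).2) \/
  (exists k i, mvread (data s) p j = ROk k i ((seq_prefix j).1 p) /\ p \in (seq_prefix j).2).

Lemma version_value_seq_prefix j p ver : mvread_matches_seq j -> entry_valid (data s) p j ver ->
  version_value W p ver = Some ((seq_prefix j).1 p).
Proof.
rewrite /entry_valid => /(_ p) [[-> [-> _]] /eqP -> // | [k [i [rd _]]]].
by rewrite rd => /eqP ->; apply: (txn_data (inv_txn I k)) (mvread_ROk_data rd).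
Qed.

Lemma mvread_matches_seqS j i : j < n -> stat s j = (i, EXECUTED) -> read_set_valid s j ->
  mvread_matches_seq j -> mvread_matches_seq j.+1.
Proof.
move=> jn sj val match_j p.
have [_ [ws [Wj [lj [dh ep]]]]] := txn_executed (inv_txn I j) sj.
have run : run_tx (seq_prefix j).1 (tx j) [::] = ws.
  rewrite (exec_prefix_run_tx ep) // => -[q ver] /val.
  exact: version_value_seq_prefix.
rewrite seq_prefixS // run /= dh /apply_ws mem_cat.
case wsp: (ws_get ws p) => [v|] /=.
  by right; exists j, i; rewrite (ws_get_mem wsp) orbT.
have -> : p \in map fst ws = false by rewrite -isSome_ws_get wsp.
by rewrite orbF; apply: match_j.
Qed.

Lemma mvread_matches_seq_upto :
  (forall j, j < n -> exists i, stat s j = (i, EXECUTED) /\ read_set_valid s j) ->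
  forall j, j <= n -> mvread_matches_seq j.
Proof.
move=> committed; elim=> [_ p|j IH jn]; first by left; rewrite /seq_prefix take0.
have [i [sj val]] := committed j jn.
exact: mvread_matches_seqS jn sj val (IH (ltnW jn)).
Qed.

End SequentialAgreement.

End Correctness.

Theorem mainTheorem1 (Loc : eqType) (Val : Type) (init : Loc -> Val)
    (txs : seq (prog Loc Val)) (m : nat) (c : config Loc Val) :
  reachable init txs m c ->
  (forall k, k < size txs -> k < gci txs c) ->
  (forall p : Loc, (exists j, isSome (data c.1 p j)) <-> p \in seq_written init txs) /\
  (forall p : Loc, p \in seq_written init txs ->
     exists j i, mvread (data c.1) p (size txs) = ROk j i (seq_final init txs p)).
Proof.
move=> /reachable_inv [W]; case: c => s ts /= I committed.
have := mvread_matches_seq_upto I (fun j => committed_read_set_valid committed I) (leqnn _).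
rewrite /mvread_matches_seq /seq_written /seq_final -seq_prefix_size => matches.
split=> p; last first.
  by move=> pw; case: (matches p) => [[_ [_ /negP]] // | [k [i [rd _]]]]; exists k, i.
split=> [[j dj]|pw].
  have [jn|nj] := ltnP j (size txs); last by rewrite (txn_data_high (inv_txn I j) nj) in dj.
  case: (matches p) => [[nf _]|[k [i [_ pw]]]] //.
  by rewrite (mvread_RNotFound_data nf jn) in dj.
case: (matches p) => [[_ [_ /negP]] // | [k [i [rd _]]]].
by exists k; rewrite (mvread_ROk_data rd).
Qed.
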